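(* Let $M$ be a Hausdorff space with continuous semiflow $(t,\omega)\mapsto t\omega$, $Z$ a Banach space, $A:D(A)\subset Z\to Z$ a closed linear operator, and $B,L:M\to L(Z,Z)$ each satisfying: $(\omega,z)\mapsto B(\omega)z$ (resp. $L(\omega)z$) is continuous, $\sup_{t\ge0}|B(t\omega)|<\infty$ (resp. $\sup_{t\ge0}|L(t\omega)|<\infty$) for every $\omega$, and these suprema are locally bounded in $\omega$. Let $\mathcal{C}(\omega)=AB(\omega)+L(\omega)$ and consider $\dot z(t)=\mathcal{C}(t\omega)z(t)$ (L) and, for $g\in C(\mathbb{R},Z)$, $\dot z(t)=\mathcal{C}(t\omega)z(t)+g(t)$ (G). (1) If (L) generates a $C_0$ linear cocycle $T_0$, then every mild solution $z\in C([0,a],Z)$ of (G) satisfies $z(t)=T_0(t,\omega)z(0)+\int_0^tT_0(t-s,s\omega)g(s)\,ds$ for $t\in[0,a]$. (2) If (L) generates a $C_0$ cocycle correspondence $\{H_1(t,\omega)\sim(T_1(t,\omega),S_1(-t,t\omega))\}$ with spectral projections $P_\omega$, $P^c_\omega$, then every mild solution $z\in C([0,a],Z)$ of (G) satisfies, with $x(t)=P_{t\omega}z(t)$, $y(t)=P^c_{t\omega}z(t)$: $x(t)=T_1(t,\omega)x(0)+\int_0^tT_1(t-s,s\omega)P_{s\omega}g(s)\,ds$ and $y(t)=S_1(t-a,a\omega)y(a)-\int_t^aS_1(t-s,s\omega)P^c_{s\omega}g(s)\,ds$ for $t\in[0,a]$.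
   Context: A mild solution of (G) on $[a_0,b]$ is $u\in C([a_0,b],Z)$ with $\int_{a_0}^tB(s\omega)u(s)ds\in D(A)$ and $u(t)=u(a_0)+A\int_{a_0}^tB(s\omega)u(s)ds+\int_{a_0}^t(L(s\omega)u(s)+g(s))ds$ for $t\in[a_0,b]$; for (L) take $g=0$. (L) generates a $C_0$ linear cocycle $T_0$ if $T_0(t,\omega)\in L(Z,Z)$, $T_0(0,\omega)=\mathrm{id}$, $T_0(t+s,\omega)=T_0(t,s\omega)T_0(s,\omega)$, $(t,\omega,x)\mapsto T_0(t,\omega)x$ continuous, and for every $x\in Z$ the function $z(t)=T_0(t,\omega)x$, $t\ge0$, is the unique mild solution of (L) with $z(0)=x$. (L) generates a $C_0$ cocycle correspondence if: $Z=X_\omega\oplus Y_\omega$ with projections $P_\omega$ (onto $X_\omega$), $P^c_\omega=I-P_\omega$, $(\omega,z)\mapsto P_\omega z$ continuous; $T_1(t,\omega)\in L(X_\omega,X_{t\omega})$ is a strongly continuous linear cocycle; $S_1(-t,t\omega)\in L(Y_{t\omega},Y_\omega)$ ($t\ge0$; indexed by $(t,\omega)$, with $S_1(t-s,s\omega)$ for $t\le s$ denoting $S_1(-(s-t),(s-t)(t\omega)):Y_{s\omega}\to Y_{t\omega}$), $S_1(0,\omega)=\mathrm{id}$, $S_1(-(t+s),(t+s)\omega)=S_1(-s,s\omega)S_1(-t,t(s\omega))$, strongly continuous; and for $t_1\le t_2$, $x_1\in X_{t_1\omega}$, $y_2\in Y_{t_2\omega}$, $z(t)=T_1(t-t_1,t_1\omega)x_1+S_1(t-t_2,t_2\omega)y_2$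 ($t_1\le t\le t_2$) is the unique mild solution of (L) on $[t_1,t_2]$ with $P_{t_1\omega}z(t_1)=x_1$, $P^c_{t_2\omega}z(t_2)=y_2$. *)

From Stdlib Require Import Reals.
From Coquelicot Require Import Coquelicot.
Open Scope R_scope.

Record topology (M : Type) := Topology {
  is_open : (M -> Prop) -> Prop;
  open_full : is_open (fun _ => True);
  open_inter : forall U V, is_open U -> is_open V -> is_open (fun x => U x /\ V x);
  open_union : forall (I : Type) (F : I -> M -> Prop),
      (forall i, is_open (F i)) -> is_open (fun x => exists i, F i x) }.
Arguments is_open {M} t _.

Definition hausdorff {M : Type} (tau : topology M) : Prop :=
  forall x y : M, x <> y -> exists U V, is_open tau U /\ is_open tau V /\
    U x /\ V y /\ forall w, ~ (U w /\ V w).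

Section Setting.
Context {M : Type} (tau : topology M) {Z : CompleteNormedModule R_AbsRing}.

Definition semiflow (phi : R -> M -> M) : Prop :=
  (forall w, phi 0 w = w) /\
  (forall t s w, 0 <= t -> 0 <= s -> phi (t + s) w = phi t (phi s w)) /\
  (forall t w V, 0 <= t -> is_open tau V -> V (phi t w) ->
     exists d U, 0 < d /\ is_open tau U /\ U w /\
       forall s w', 0 <= s -> Rabs (s - t) < d -> U w' -> V (phi s w')).

Definition cont_MZ (F : M -> Z -> Z) : Prop :=
  forall w z eps, 0 < eps -> exists U d, is_open tau U /\ U w /\ 0 < d /\
    forall w' z', U w' -> norm (minus z' z) < d -> norm (minus (F w' z') (F w z)) < eps.

Definition coef_op (phi : R -> M -> M) (F : M -> Z -> Z) : Prop :=
  (forall w, is_linear (F w)) /\ cont_MZ F /\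
  (forall w, exists K, forall t z, 0 <= t -> norm (F (phi t w) z) <= K * norm z) /\
  (forall w, exists U K, is_open tau U /\ U w /\
     forall w' t z, U w' -> 0 <= t -> norm (F (phi t w') z) <= K * norm z).

Definition closed_op (D : Z -> Prop) (A : Z -> Z) : Prop :=
  D zero /\
  (forall x y, D x -> D y -> D (plus x y) /\ A (plus x y) = plus (A x) (A y)) /\
  (forall (k : R) x, D x -> D (scal k x) /\ A (scal k x) = scal k (A x)) /\
  (forall (xn : nat -> Z) x y, (forall n, D (xn n)) ->
     filterlim xn eventually (locally x) ->
     filterlim (fun n => A (xn n)) eventually (locally y) -> D x /\ A x = y).

Definition cont_on (a0 b : R) (u : R -> Z) : Prop :=
  forall t eps, a0 <= t <= b -> 0 < eps -> exists d, 0 < d /\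
    forall s, a0 <= s <= b -> Rabs (s - t) < d -> norm (minus (u s) (u t)) < eps.

Definition mild_sol (D : Z -> Prop) (A : Z -> Z) (B L : M -> Z -> Z)
  (phi : R -> M -> M) (w : M) (g : R -> Z) (a0 b : R) (u : R -> Z) : Prop :=
  cont_on a0 b u /\
  forall t, a0 <= t <= b ->
    D (RInt (fun s => B (phi s w) (u s)) a0 t) /\
    u t = plus (plus (u a0) (A (RInt (fun s => B (phi s w) (u s)) a0 t)))
               (RInt (fun s => plus (L (phi s w) (u s)) (g s)) a0 t).

Definition zero_fun : R -> Z := fun _ => zero.

Definition C0_cocycle (D : Z -> Prop) (A : Z -> Z) (B L : M -> Z -> Z)
  (phi : R -> M -> M) (T0 : R -> M -> Z -> Z) : Prop :=
  (forall t w, 0 <= t -> is_linear (T0 t w)) /\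
  (forall w x, T0 0 w x = x) /\
  (forall t s w x, 0 <= t -> 0 <= s -> T0 (t + s) w x = T0 t (phi s w) (T0 s w x)) /\
  (forall t w x eps, 0 <= t -> 0 < eps -> exists d U, 0 < d /\ is_open tau U /\ U w /\
     forall s w' x', 0 <= s -> Rabs (s - t) < d -> U w' -> norm (minus x' x) < d ->
       norm (minus (T0 s w' x') (T0 t w x)) < eps) /\
  (forall w x b, 0 <= b ->
     mild_sol D A B L phi w zero_fun 0 b (fun t => T0 t w x) /\
     forall u, mild_sol D A B L phi w zero_fun 0 b u -> u 0 = x ->
       forall t, 0 <= t <= b -> u t = T0 t w x).

Definition Pc (P : M -> Z -> Z) (w : M) (z : Z) : Z := minus z (P w z).
Definition Xsp (P : M -> Z -> Z) (w : M) (x : Z) : Prop := P w x = x.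
Definition Ysp (P : M -> Z -> Z) (w : M) (y : Z) : Prop := Pc P w y = y.

Definition lin_between (S1 S2 : Z -> Prop) (T : Z -> Z) : Prop :=
  (forall x, S1 x -> S2 (T x)) /\
  (forall x y, S1 x -> S1 y -> T (plus x y) = plus (T x) (T y)) /\
  (forall (k : R) x, S1 x -> T (scal k x) = scal k (T x)) /\
  (exists K, forall x, S1 x -> norm (T x) <= K * norm x).

(** (L) generates the C_0 cocycle correspondence
    H_1(t,w) ~ (T1(t,w), S1(-t,tw)); here  Sb t w  stands for  S1(-t, t w) :
    Y_{tw} -> Y_w, so that S1(t-s, s w) (t <= s) is  Sb (s-t) (phi t w). *)
Definition C0_correspondence (D : Z -> Prop) (A : Z -> Z) (B L : M -> Z -> Z)
  (phi : R -> M -> M) (P : M -> Z -> Z) (T1 Sb : R -> M -> Z -> Z) : Prop :=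
  (forall w, is_linear (P w)) /\ (forall w z, P w (P w z) = P w z) /\ cont_MZ P /\
  (forall t w, 0 <= t -> lin_between (Xsp P w) (Xsp P (phi t w)) (T1 t w)) /\
  (forall w x, Xsp P w x -> T1 0 w x = x) /\
  (forall t s w x, 0 <= t -> 0 <= s -> Xsp P w x ->
     T1 (t + s) w x = T1 t (phi s w) (T1 s w x)) /\
  (forall t w x eps, 0 <= t -> Xsp P w x -> 0 < eps ->
     exists d U, 0 < d /\ is_open tau U /\ U w /\
     forall s w' x', 0 <= s -> Rabs (s - t) < d -> U w' -> Xsp P w' x' ->
       norm (minus x' x) < d -> norm (minus (T1 s w' x') (T1 t w x)) < eps) /\
  (forall t w, 0 <= t -> lin_between (Ysp P (phi t w)) (Ysp P w) (Sb t w)) /\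
  (forall w y, Ysp P w y -> Sb 0 w y = y) /\
  (forall t s w y, 0 <= t -> 0 <= s -> Ysp P (phi (t + s) w) y ->
     Sb (t + s) w y = Sb s w (Sb t (phi s w) y)) /\
  (forall t w y eps, 0 <= t -> Ysp P (phi t w) y -> 0 < eps ->
     exists d U, 0 < d /\ is_open tau U /\ U w /\
     forall s w' y', 0 <= s -> Rabs (s - t) < d -> U w' -> Ysp P (phi s w') y' ->
       norm (minus y' y) < d -> norm (minus (Sb s w' y') (Sb t w y)) < eps) /\
  (forall w t1 t2 x1 y2, 0 <= t1 -> t1 <= t2 ->
     Xsp P (phi t1 w) x1 -> Ysp P (phi t2 w) y2 ->
     let z := fun t => plus (T1 (t - t1) (phi t1 w) x1) (Sb (t2 - t) (phi t w) y2) in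
     (mild_sol D A B L phi w zero_fun t1 t2 z /\
      P (phi t1 w) (z t1) = x1 /\ Pc P (phi t2 w) (z t2) = y2) /\
     forall u, mild_sol D A B L phi w zero_fun t1 t2 u ->
       P (phi t1 w) (u t1) = x1 -> Pc P (phi t2 w) (u t2) = y2 ->
       forall t, t1 <= t <= t2 -> u t = z t).

End Setting.

From Stdlib Require Import Reals Lra Classical ClassicalEpsilon.
From Coquelicot Require Import Coquelicot.
Open Scope R_scope.

(* Both formulas follow from superposition and uniqueness of mild solutions.  For each r the
   kernel t |-> T(t - r, r w) g(r) is the mild solution of the homogeneous equation started at
   time r from g(r); integrating over r and exchanging the order of integration on the triangle
   0 <= r <= s <= t (the closed operator A commutes with Riemann integrals since it commutes with
   Riemann sums) shows that the Duhamel integral solves the equation with forcing g.  For a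
   cocycle, z minus T0(t, w) z(0) minus this integral solves the homogeneous equation with zero
   initial value, hence vanishes.  For a cocycle correspondence, the X-part is built forwards as
   above and the Y-part backwards from time a (time reversal reduces it to the forward case);
   z minus their sum solves the homogeneous two-point problem with zero data, hence vanishes, and
   projecting onto X and Y gives the two formulas. *)

(** * Algebraic identities *)

Section AbelianGroupIdentities.
Context {G : AbelianGroup}.
Implicit Types a b c d x y : G.

Lemma plus_minus_cancel_r x y : plus (minus x y) y = x.
Proof. unfold minus. rewrite <- plus_assoc, plus_opp_l. apply plus_zero_r. Qed.

Lemma minus_plus_cancel_r x y : minus (plus x y) y = x.
Proof.
  unfold minus. rewrite <- plus_assoc. fold (minus y y). rewrite minus_eq_zero. apply plus_zero_r.
Qed.

Lemma minus_plus_cancel_l x y : minus (plus x y) x = y.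
Proof. rewrite plus_comm. apply minus_plus_cancel_r. Qed.

Lemma minus_plus_comm a b c : minus (plus a b) c = plus b (minus a c).
Proof. unfold minus. rewrite (plus_comm a b). apply eq_sym, plus_assoc. Qed.

Lemma minus_plus_assoc a b c : minus (plus a b) c = plus a (minus b c).
Proof. unfold minus. apply eq_sym, plus_assoc. Qed.

Lemma plus_plus_exchange a b c d : plus (plus a b) (plus c d) = plus (plus a c) (plus b d).
Proof. rewrite <- !plus_assoc. f_equal. rewrite !plus_assoc. f_equal. apply plus_comm. Qed.

Lemma minus_plus_exchange a b c d : minus (plus a b) (plus c d) = plus (minus a c) (minus b d).
Proof. unfold minus. rewrite opp_plus. apply plus_plus_exchange. Qed.

Lemma minus_minus_exchange a b c d : minus (minus a b) (minus c d) = minus (minus a c) (minus b d).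
Proof.
  unfold minus at 1 4. rewrite !opp_minus. unfold minus. rewrite <- !plus_assoc. f_equal.
  rewrite (plus_comm d), (plus_comm d), !plus_assoc. f_equal. apply plus_comm.
Qed.

End AbelianGroupIdentities.

Lemma plus_plus_rebase {G : AbelianGroup} (x y v p q p' q' : G) :
  x = plus (plus v p) q -> y = plus (plus v p') q' ->
  x = plus (plus y (minus p p')) (minus q q').
Proof.
  intros -> ->. symmetry.
  rewrite <- (plus_assoc (plus v p') q' (minus p p')), (plus_comm q' (minus p p')), plus_assoc,
    <- (plus_assoc v p' (minus p p')), (plus_comm p' (minus p p')), (@plus_minus_cancel_r G).
  rewrite <- (plus_assoc (plus v p) q' (minus q q')), (plus_comm q' (minus q q')),
    (@plus_minus_cancel_r G).
  reflexivity.
Qed.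

Lemma minus_minus_of_plus_plus {G : AbelianGroup} (x y z w : G) :
  x = plus (plus y z) w -> z = minus (minus x y) w.
Proof.
  intros ->. rewrite (@minus_plus_comm G), (@minus_plus_cancel_l G), (@minus_plus_cancel_l G).
  reflexivity.
Qed.

Lemma minus_minus_plus_cancel {G : AbelianGroup} (x y w : G) :
  plus (minus (minus x y) w) (plus w y) = x.
Proof. rewrite plus_assoc, (@plus_minus_cancel_r G). apply (@plus_minus_cancel_r G). Qed.

Lemma eq_plus_of_minus_minus {G : AbelianGroup} (x y z : G) :
  minus (minus x y) z = zero -> x = plus y z.
Proof.
  intros H. rewrite <- (@plus_minus_cancel_r G x y), <- (@plus_minus_cancel_r G (minus x y) z), H.
  rewrite plus_zero_l. apply plus_comm.
Qed.

Section NormBasics.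
Context {Z : CompleteNormedModule R_AbsRing}.
Implicit Types x y z : Z.

Lemma norm_minus_sym x y : norm (minus x y) = norm (minus y x).
Proof. rewrite <- norm_opp, opp_minus. reflexivity. Qed.

Lemma norm_minus_triangle x y z : norm (minus x z) <= norm (minus x y) + norm (minus y z).
Proof. rewrite (minus_trans y x z). apply (@norm_triangle R_AbsRing Z). Qed.

Lemma norm_le_minus x y : norm x <= norm (minus x y) + norm y.
Proof. rewrite <- (plus_minus_cancel_r x y) at 1. apply (@norm_triangle R_AbsRing Z). Qed.

Lemma eq_of_norm_minus_le x y : (forall eps, 0 < eps -> norm (minus x y) <= eps) -> x = y.
Proof.
  intros H. assert (Hn : norm (minus x y) = 0).
  { apply Rle_antisym; [|apply norm_ge_0]. apply Rnot_lt_le. intros Hpos.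
    assert (H2 := H (norm (minus x y) / 2) ltac:(lra)). lra. }
  apply norm_eq_zero in Hn. rewrite <- (plus_minus_cancel_r x y), Hn. apply plus_zero_l.
Qed.

End NormBasics.

(** * Continuity on compact intervals *)

Lemma INR_mult_unbounded c d : 0 < d -> exists k, c < INR k * d.
Proof.
  intros Hd. destruct (INR_unbounded (c / d)) as [k Hk]. exists k.
  apply Rmult_lt_reg_r with (/ d); [apply Rinv_0_lt_compat; exact Hd|].
  rewrite Rmult_assoc, Rinv_r, Rmult_1_r by lra. exact Hk.
Qed.

Lemma Rmax_step_back a x h k : 0 < h -> 0 <= k -> a <= x <= a + (k + 1) * h ->
  a <= Rmax a (x - h) <= x /\ Rmax a (x - h) <= a + k * h /\ Rabs (x - Rmax a (x - h)) <= h.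
Proof.
  intros Hh Hk Hx. unfold Rmax; destruct Rle_dec; repeat split; try nra.
  all: unfold Rabs; destruct Rcase_abs; lra.
Qed.

Definition clamp (a b x : R) : R := Rmax a (Rmin b x).

Lemma clamp_in a b x : a <= b -> a <= clamp a b x <= b.
Proof. intros; unfold clamp, Rmax, Rmin; repeat destruct Rle_dec; lra. Qed.

Lemma clamp_id a b x : a <= x <= b -> clamp a b x = x.
Proof. intros; unfold clamp, Rmax, Rmin; repeat destruct Rle_dec; lra. Qed.

Lemma clamp_lip a b x y : a <= b -> Rabs (clamp a b x - clamp a b y) <= Rabs (x - y).
Proof.
  intros; unfold clamp, Rmax, Rmin; repeat destruct Rle_dec;
    unfold Rabs; repeat destruct Rcase_abs; lra.
Qed.

Section IntervalContinuity.
Context {Z : CompleteNormedModule R_AbsRing}.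
Implicit Types (u v : R -> Z).

Lemma cont_on_clamp a b u : a <= b -> cont_on a b u ->
  forall x, continuous (fun y => u (clamp a b y)) x.
Proof.
  intros Hab Hu x P [eps HP].
  destruct (Hu (clamp a b x) eps (clamp_in a b x Hab) (cond_pos eps)) as [d [Hd Hud]].
  exists (mkposreal d Hd). intros y Hy. apply HP.
  refine (norm_compat1 _ _ _ (Hud _ (clamp_in a b y Hab) _)).
  eapply Rle_lt_trans; [apply clamp_lip; exact Hab | exact Hy].
Qed.

Lemma cont_on_of_clamp a b u :
  (a <= b -> forall x, continuous (fun y => u (clamp a b y)) x) -> cont_on a b u.
Proof.
  intros Hc t eps Ht He. assert (Hct := Hc ltac:(lra) t).
  destruct (proj1 (filterlim_locally_ball_norm _ _) Hct (mkposreal eps He)) as [d Hd].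
  exists d; split; [apply cond_pos|]. intros s Hs Hst.
  specialize (Hd s Hst). cbv beta in Hd. rewrite !clamp_id in Hd by assumption. exact Hd.
Qed.

Lemma cont_on_of_continuous a b u : (forall t, continuous u t) -> cont_on a b u.
Proof.
  intros Hu. apply cont_on_of_clamp. intros Hab x.
  apply (continuous_comp (clamp a b) u); [|apply Hu].
  apply filterlim_locally. intros eps. exists eps. intros y Hy.
  eapply Rle_lt_trans; [apply clamp_lip; exact Hab | exact Hy].
Qed.

Lemma cont_on_sub a b c d u : cont_on a b u -> a <= c -> d <= b -> cont_on c d u.
Proof.
  intros Hu Hac Hdb t eps Ht He. destruct (Hu t eps) as [e [He' Hue]]; [lra|exact He|].
  exists e; split; [exact He'|]. intros s Hs. apply Hue; lra.
Qed.

Lemma cont_on_ext a b u v : (forall t, a <= t <= b -> u t = v t) -> cont_on a b u -> cont_on a b v.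
Proof.
  intros E Hu t eps Ht He. destruct (Hu t eps Ht He) as [d [Hd Hud]].
  exists d; split; [exact Hd|]. intros s Hs Hst. rewrite <- !E by assumption. apply Hud; assumption.
Qed.

Lemma cont_on_plus a b u v : cont_on a b u -> cont_on a b v ->
  cont_on a b (fun t => plus (u t) (v t)).
Proof.
  intros Hu Hv. apply cont_on_of_clamp. intros Hab x.
  apply (@continuous_plus _ R_AbsRing Z); apply cont_on_clamp; assumption.
Qed.

Lemma cont_on_minus a b u v : cont_on a b u -> cont_on a b v ->
  cont_on a b (fun t => minus (u t) (v t)).
Proof.
  intros Hu Hv. apply cont_on_of_clamp. intros Hab x.
  apply (@continuous_minus _ R_AbsRing Z); apply cont_on_clamp; assumption.
Qed.

Lemma cont_on_opp a b u : cont_on a b u -> cont_on a b (fun t => opp (u t)).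
Proof.
  intros Hu. apply cont_on_of_clamp. intros Hab x.
  apply (@continuous_opp _ R_AbsRing Z). apply cont_on_clamp; assumption.
Qed.

Lemma cont_on_scal a b (k : R) u : cont_on a b u -> cont_on a b (fun t => scal k (u t)).
Proof.
  intros Hu. apply cont_on_of_clamp. intros Hab x.
  apply (@continuous_scal_r _ R_AbsRing Z). apply cont_on_clamp; assumption.
Qed.

Lemma cont_on_reflect a b c u : cont_on a b u -> cont_on (c - b) (c - a) (fun t => u (c - t)).
Proof.
  intros Hu t eps Ht He. destruct (Hu (c - t) eps ltac:(lra) He) as [d [Hd Hud]].
  exists d; split; [exact Hd|]. intros s Hs Hst. apply Hud; [lra|].
  replace (c - s - (c - t)) with (- (s - t)) by ring. rewrite Rabs_Ropp. exact Hst.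
Qed.

Lemma cont_on_shift a b r u : cont_on a b u -> cont_on (a + r) (b + r) (fun t => u (t - r)).
Proof.
  intros Hu t eps Ht He. destruct (Hu (t - r) eps ltac:(lra) He) as [d [Hd Hud]].
  exists d; split; [exact Hd|]. intros s Hs Hst. apply Hud; [lra|].
  replace (s - r - (t - r)) with (s - t) by ring. exact Hst.
Qed.

Lemma ex_RInt_cont_on a b c d u : a <= c <= b -> a <= d <= b -> cont_on a b u -> ex_RInt u c d.
Proof.
  intros Hc Hd Hu.
  apply ex_RInt_ext with (f := fun y => u (clamp a b y)).
  - intros x Hx. rewrite clamp_id; [reflexivity|].
    unfold Rmin, Rmax in Hx; destruct Rle_dec in Hx; lra.
  - apply ex_RInt_continuous. intros x _. apply cont_on_clamp; [lra | exact Hu].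
Qed.

Lemma cont_on_unif a b u : cont_on a b u -> forall eps, 0 < eps -> exists d, 0 < d /\
  forall x y, a <= x <= b -> a <= y <= b -> Rabs (y - x) < d -> norm (minus (u y) (u x)) < eps.
Proof.
  intros Hu eps He. destruct (Rle_or_lt a b) as [Hab|Hba].
  2: { exists 1; split; [lra|]. intros; lra. }
  destruct (unifcont_normed_1d (fun y => u (clamp a b y)) a b
              (fun x _ => cont_on_clamp a b u Hab Hu x) (mkposreal eps He)) as [d Hd].
  exists d; split; [apply cond_pos|]. intros x y Hx Hy Hxy.
  specialize (Hd x y Hx Hy Hxy). cbv beta in Hd. rewrite !clamp_id in Hd by assumption. exact Hd.
Qed.

End IntervalContinuity.

Section JointContinuity.
Context {Z : CompleteNormedModule R_AbsRing}.
Implicit Types F : R -> R -> Z.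

Definition cont_on2 (a b : R) F : Prop :=
  forall x y eps, a <= x <= b -> a <= y <= b -> 0 < eps -> exists d, 0 < d /\
  forall x' y', a <= x' <= b -> a <= y' <= b -> Rabs (x' - x) < d -> Rabs (y' - y) < d ->
    norm (minus (F x' y') (F x y)) < eps.

Lemma cont_on2_unif a b F : cont_on2 a b F -> forall eps, 0 < eps -> exists d, 0 < d /\
  forall x y x' y', a <= x <= b -> a <= y <= b -> a <= x' <= b -> a <= y' <= b ->
    Rabs (x' - x) < d -> Rabs (y' - y) < d -> norm (minus (F x' y') (F x y)) < eps.
Proof.
  intros Hc eps He.
  assert (Hloc : forall u v : R, {d : posreal | a <= u <= b -> a <= v <= b ->
     forall x' y', a <= x' <= b -> a <= y' <= b -> Rabs (x' - u) < d -> Rabs (y' - v) < d ->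
     norm (minus (F x' y') (F u v)) < eps / 2}).
  { intros u v. apply constructive_indefinite_description.
    destruct (classic (a <= u <= b /\ a <= v <= b)) as [[Hu Hv]|Hn].
    - destruct (Hc u v (eps / 2) Hu Hv) as [d [Hd H]]; [lra|].
      exists (mkposreal d Hd). intros; apply H; assumption.
    - exists (mkposreal 1 Rlt_0_1). intros; tauto. }
  destruct (compactness_value_2d a b a b (fun u v => pos_div_2 (proj1_sig (Hloc u v))))
    as [d Hd].
  exists d; split; [apply cond_pos|].
  intros x y x' y' Hx Hy Hx' Hy' Hxx Hyy.
  apply NNPP; intros Hneg. apply (Hd x y Hx Hy).
  intros [u [v [Hu [Hv [Hxu [Hyv Hdle]]]]]]. apply Hneg.
  destruct (Hloc u v) as [e He']; simpl in *.
  assert (H1 : norm (minus (F x' y') (F u v)) < eps / 2).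
  { apply He'; try assumption.
    - replace (x' - u) with ((x' - x) + (x - u)) by ring.
      eapply Rle_lt_trans; [apply Rabs_triang|]. lra.
    - replace (y' - v) with ((y' - y) + (y - v)) by ring.
      eapply Rle_lt_trans; [apply Rabs_triang|]. lra. }
  assert (H2 : norm (minus (F x y) (F u v)) < eps / 2).
  { pose proof (cond_pos e). apply He'; try assumption; lra. }
  eapply Rle_lt_trans; [apply (norm_minus_triangle _ (F u v))|].
  rewrite (norm_minus_sym (F u v)). lra.
Qed.

(* Walk from (a, a) to (x, y) in steps shorter than the modulus of uniform continuity. *)
Lemma cont_on2_bounded a b F : a <= b -> cont_on2 a b F -> exists K, 0 <= K /\
  forall x y, a <= x <= b -> a <= y <= b -> norm (F x y) <= K.
Proof.
  intros Hab Hc. destruct (cont_on2_unif a b F Hc 1 Rlt_0_1) as [d [Hd Hu]].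
  assert (Hk : forall k, forall x y, a <= x <= b -> a <= y <= b ->
             x <= a + INR k * (d / 2) -> y <= a + INR k * (d / 2) ->
             norm (F x y) <= norm (F a a) + INR k).
  { induction k as [|k IH]; intros x y Hx Hy Hxk Hyk.
    - simpl in Hxk, Hyk. replace x with a by lra. replace y with a by lra. simpl; lra.
    - rewrite S_INR in *. pose proof (pos_INR k).
      destruct (Rmax_step_back a x (d / 2) (INR k)) as [Hx'1 [Hx'2 Hx'3]]; [lra|lra|lra|].
      destruct (Rmax_step_back a y (d / 2) (INR k)) as [Hy'1 [Hy'2 Hy'3]]; [lra|lra|lra|].
      set (x' := Rmax a (x - d / 2)) in *. set (y' := Rmax a (y - d / 2)) in *.
      eapply Rle_trans; [apply (norm_le_minus _ (F x' y'))|].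
      assert (norm (minus (F x y) (F x' y')) < 1) by (apply Hu; lra).
      assert (norm (F x' y') <= norm (F a a) + INR k) by (apply IH; lra).
      lra. }
  destruct (INR_mult_unbounded (b - a) (d / 2)) as [k Hk']; [lra|].
  exists (norm (F a a) + INR k).
  split; [pose proof (norm_ge_0 (F a a)); pose proof (pos_INR k); lra|].
  intros x y Hx Hy. apply Hk; lra.
Qed.

Lemma cont_on2_of_fst a b (u : R -> Z) : cont_on a b u -> cont_on2 a b (fun x _ => u x).
Proof.
  intros Hu x y eps Hx Hy He. destruct (Hu x eps Hx He) as [d [Hd H]].
  exists d; split; [exact Hd|]. intros; apply H; assumption.
Qed.

Lemma cont_on2_of_snd a b (u : R -> Z) : cont_on a b u -> cont_on2 a b (fun _ y => u y).
Proof.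
  intros Hu x y eps Hx Hy He. destruct (Hu y eps Hy He) as [d [Hd H]].
  exists d; split; [exact Hd|]. intros; apply H; assumption.
Qed.

Lemma cont_on2_swap a b F : cont_on2 a b F -> cont_on2 a b (fun x y => F y x).
Proof.
  intros H x y eps Hx Hy He. destruct (H y x eps Hy Hx He) as [d [Hd Hd']].
  exists d; split; [exact Hd|]. intros; apply Hd'; assumption.
Qed.

Lemma cont_on2_diag a b F : cont_on2 a b F -> cont_on a b (fun s => F s s).
Proof.
  intros H t eps Ht He. destruct (H t t eps Ht Ht He) as [d [Hd Hd']].
  exists d; split; [exact Hd|]. intros; apply Hd'; assumption.
Qed.

Lemma cont_on2_fix_l a b F x : cont_on2 a b F -> a <= x <= b -> cont_on a b (F x).
Proof.
  intros H Hx y eps Hy He. destruct (H x y eps Hx Hy He) as [d [Hd Hd']].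
  exists d; split; [exact Hd|]. intros s Hs Hsy. apply Hd'; try assumption.
  rewrite Rminus_eq_0, Rabs_R0; exact Hd.
Qed.

Lemma cont_on2_fix_r a b F y : cont_on2 a b F -> a <= y <= b -> cont_on a b (fun x => F x y).
Proof. intros H. apply (cont_on2_fix_l a b (fun x y => F y x)), cont_on2_swap, H. Qed.

Lemma cont_on2_reflect a b c F : cont_on2 a b F ->
  cont_on2 (c - b) (c - a) (fun x y => F (c - y) (c - x)).
Proof.
  intros H x y eps Hx Hy He.
  destruct (H (c - y) (c - x) eps ltac:(lra) ltac:(lra) He) as [d [Hd Hd']].
  exists d; split; [exact Hd|]. intros x' y' Hx' Hy' Hxx Hyy. apply Hd'; try lra.
  - replace (c - y' - (c - y)) with (- (y' - y)) by ring. rewrite Rabs_Ropp; exact Hyy.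
  - replace (c - x' - (c - x)) with (- (x' - x)) by ring. rewrite Rabs_Ropp; exact Hxx.
Qed.

Lemma norm_RInt_le_between a b c d (f : R -> Z) K : a <= c <= b -> a <= d <= b -> cont_on a b f ->
  (forall x, a <= x <= b -> norm (f x) <= K) -> norm (RInt f c d) <= Rabs (d - c) * K.
Proof.
  intros Hc Hd Hf HK. apply (norm_RInt_le_const_abs f c d).
  - intros x Hx. apply HK. unfold Rmin, Rmax in Hx; destruct Rle_dec in Hx; lra.
  - apply RInt_correct, (ex_RInt_cont_on a b); assumption.
Qed.

Lemma cont_on_RInt_param a b F (lo hi : R -> R) : a <= b -> cont_on2 a b F ->
  (forall s t, Rabs (lo s - lo t) <= Rabs (s - t)) ->
  (forall s t, Rabs (hi s - hi t) <= Rabs (s - t)) ->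
  (forall t, a <= t <= b -> a <= lo t <= b /\ a <= hi t <= b) ->
  cont_on a b (fun t => RInt (F t) (lo t) (hi t)).
Proof.
  intros Hab HF Hlo Hhi Hin t eps Ht He.
  destruct (cont_on2_bounded a b F Hab HF) as [K [HK0 HK]].
  set (e1 := eps / (3 * (b - a + 1))).
  destruct (cont_on2_unif a b F HF e1) as [d1 [Hd1 Hu]]; [unfold e1; apply Rdiv_lt_0_compat; lra|].
  exists (Rmin d1 (eps / (3 * (K + 1)))).
  split; [apply Rmin_pos; [exact Hd1 | apply Rdiv_lt_0_compat; lra]|].
  intros s Hs Hst. pose proof (Rmin_l d1 (eps / (3 * (K + 1)))) as Hm1.
  pose proof (Rmin_r d1 (eps / (3 * (K + 1)))) as Hm2.
  destruct (Hin s Hs) as [Hls Hhs], (Hin t Ht) as [Hlt Hht].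
  assert (HFs := cont_on2_fix_l a b F s HF Hs). assert (HFt := cont_on2_fix_l a b F t HF Ht).
  eapply Rle_lt_trans; [apply (norm_minus_triangle _ (RInt (F t) (lo s) (hi s)))|].
  assert (H1 : norm (minus (RInt (F s) (lo s) (hi s)) (RInt (F t) (lo s) (hi s)))
               <= (b - a) * e1).
  { rewrite <- RInt_minus by (apply (ex_RInt_cont_on a b); assumption).
    eapply Rle_trans; [apply (norm_RInt_le_between a b); try eassumption|].
    - apply cont_on_minus; assumption.
    - intros x Hx. left. apply Hu; try assumption; [lra|]. rewrite Rminus_eq_0, Rabs_R0; exact Hd1.
    - apply Rmult_le_compat_r; [unfold e1; apply Rlt_le, Rdiv_lt_0_compat; lra|].
      unfold Rabs; destruct Rcase_abs; lra. }
  assert (H2 : norm (minus (RInt (F t) (lo s) (hi s)) (RInt (F t) (lo t) (hi t)))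
               <= Rabs (lo t - lo s) * K + Rabs (hi s - hi t) * K).
  { rewrite <- (RInt_Chasles (F t) (lo s) (lo t) (hi s))
      by (apply (ex_RInt_cont_on a b); assumption).
    rewrite <- (RInt_Chasles (F t) (lo t) (hi t) (hi s))
      by (apply (ex_RInt_cont_on a b); assumption).
    rewrite (plus_comm (RInt (F t) (lo t) (hi t))), plus_assoc, (@minus_plus_cancel_r Z).
    eapply Rle_trans; [apply (@norm_triangle R_AbsRing Z)|].
    apply Rplus_le_compat; apply (norm_RInt_le_between a b); try assumption;
      intros; apply HK; assumption. }
  assert (Rabs (lo t - lo s) * K + Rabs (hi s - hi t) * K <= 2 * Rabs (s - t) * K).
  { assert (Hlo' : Rabs (lo t - lo s) <= Rabs (s - t)) by (rewrite (Rabs_minus_sym s t); apply Hlo).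
    assert (Hhi' := Hhi s t). nra. }
  assert (2 * Rabs (s - t) * K < 2 * eps / 3).
  { apply Rle_lt_trans with (2 * (eps / (3 * (K + 1))) * K).
    - pose proof (Rabs_pos (s - t)). apply Rmult_le_compat_r; [exact HK0|]. lra.
    - apply Rmult_lt_reg_r with (3 * (K + 1)); [lra|]. field_simplify; [nra|lra]. }
  assert ((b - a) * e1 < eps / 3).
  { unfold e1. apply Rmult_lt_reg_r with (3 * (b - a + 1)); [lra|]. field_simplify; [nra|lra]. }
  lra.
Qed.

Lemma cont_on_RInt_0_t a W : 0 <= a -> cont_on2 0 a W ->
  cont_on 0 a (fun t => RInt (fun r => W r t) 0 t).
Proof.
  intros Ha HW. apply (cont_on_RInt_param 0 a (fun t r => W r t) (fun _ => 0) (fun t => t)).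
  - exact Ha.
  - apply cont_on2_swap, HW.
  - intros; rewrite Rminus_eq_0, Rabs_R0; apply Rabs_pos.
  - intros; apply Rle_refl.
  - intros; lra.
Qed.

Lemma cont_on_RInt_t_c a c V : 0 <= c <= a -> cont_on2 0 a V ->
  cont_on 0 a (fun t => RInt (V t) t c).
Proof.
  intros Hc HV. apply (cont_on_RInt_param 0 a V (fun t => t) (fun _ => c)).
  - lra.
  - exact HV.
  - intros; apply Rle_refl.
  - intros; rewrite Rminus_eq_0, Rabs_R0; apply Rabs_pos.
  - intros; lra.
Qed.

Lemma cont_on_RInt_u_v a u v F : 0 <= u <= a -> 0 <= v <= a -> cont_on2 0 a F ->
  cont_on 0 a (fun r => RInt (F r) u v).
Proof.
  intros Hu Hv HF. apply (cont_on_RInt_param 0 a F (fun _ => u) (fun _ => v)).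
  - lra.
  - exact HF.
  - intros; rewrite Rminus_eq_0, Rabs_R0; apply Rabs_pos.
  - intros; rewrite Rminus_eq_0, Rabs_R0; apply Rabs_pos.
  - intros; lra.
Qed.

End JointContinuity.

(** * Riemann integrals *)

Section IntegralEstimates.
Context {Z : CompleteNormedModule R_AbsRing}.

Lemma small_increments_eq_zero (H : R -> Z) a b : H a = zero ->
  (forall eps, 0 < eps -> exists d, 0 < d /\ forall t t', a <= t -> t <= t' -> t' <= b ->
     t' - t < d -> norm (minus (H t') (H t)) <= eps * (t' - t)) ->
  forall t, a <= t <= b -> H t = zero.
Proof.
  intros H0 Hinc t Ht. apply eq_of_norm_minus_le. intros eps He. rewrite (@minus_zero_r Z).
  set (e := eps / (b - a + 1)).
  destruct (Hinc e) as [d [Hd Hd']]; [unfold e; apply Rdiv_lt_0_compat; lra|].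
  assert (Hk : forall k s, a <= s <= b -> s <= a + INR k * (d / 2) -> norm (H s) <= e * (s - a)).
  { induction k as [|k IH]; intros s Hs Hsk.
    - simpl in Hsk. replace s with a by lra. rewrite H0, Rminus_eq_0, Rmult_0_r.
      right. exact (@norm_zero R_AbsRing Z).
    - rewrite S_INR in Hsk. pose proof (pos_INR k).
      destruct (Rmax_step_back a s (d / 2) (INR k)) as [Hs1 [Hs2 Hs3]]; [lra|lra|lra|].
      set (s' := Rmax a (s - d / 2)) in *.
      eapply Rle_trans; [apply (norm_le_minus _ (H s'))|].
      assert (norm (minus (H s) (H s')) <= e * (s - s'))
        by (apply Hd'; try lra; unfold Rabs in Hs3; destruct Rcase_abs in Hs3; lra).
      assert (norm (H s') <= e * (s' - a)) by (apply IH; lra).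
      lra. }
  destruct (INR_mult_unbounded (b - a) (d / 2)) as [k Hk']; [lra|].
  eapply Rle_trans; [apply (Hk k); lra|].
  assert (e * (b - a + 1) = eps) by (unfold e; field; lra).
  assert (0 < e) by (unfold e; apply Rdiv_lt_0_compat; lra). nra.
Qed.

Lemma norm_RInt_minus_const_le (f : R -> Z) (c : Z) t t' e : t <= t' -> ex_RInt f t t' ->
  (forall x, t <= x <= t' -> norm (minus (f x) c) <= e) ->
  norm (minus (RInt f t t') (scal (t' - t) c)) <= (t' - t) * e.
Proof.
  intros Htt Hf Hc.
  rewrite <- (RInt_const t t' c), <- RInt_minus by (try apply ex_RInt_const; exact Hf).
  apply (norm_RInt_le_const (fun x => minus (f x) c) t t'); [exact Htt | exact Hc |].
  apply RInt_correct, ex_RInt_minus; [exact Hf | apply ex_RInt_const].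
Qed.

Lemma RInt_minus_Chasles (f : R -> Z) a b c : ex_RInt f a b -> ex_RInt f b c ->
  minus (RInt f a c) (RInt f a b) = RInt f b c.
Proof.
  intros Hab Hbc. rewrite <- (RInt_Chasles f a b c Hab Hbc). apply (@minus_plus_cancel_l Z).
Qed.

End IntegralEstimates.

Section TriangleSwap.
Context {Z : CompleteNormedModule R_AbsRing}.
Variables (a : R) (F : R -> R -> Z).
Hypotheses (Ha : 0 <= a) (HF : cont_on2 0 a F).

Definition triangle_defect (t : R) : Z :=
  minus (RInt (fun s => RInt (fun r => F r s) 0 s) 0 t) (RInt (fun r => RInt (F r) r t) 0 t).

Lemma triangle_outer_increment t t' : 0 <= t -> t <= t' -> t' <= a ->
  minus (RInt (fun r => RInt (F r) r t') 0 t') (RInt (fun r => RInt (F r) r t) 0 t) =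
  plus (RInt (fun r => RInt (F r) r t') t t') (RInt (fun r => RInt (F r) t t') 0 t).
Proof.
  intros Ht Htt Ht'.
  assert (HJ : forall c, 0 <= c <= a -> cont_on 0 a (fun r => RInt (F r) r c))
    by (intros; apply cont_on_RInt_t_c; assumption).
  rewrite <- (RInt_Chasles _ 0 t t') by (apply (ex_RInt_cont_on 0 a); try apply HJ; lra).
  rewrite (@minus_plus_comm Z). f_equal.
  rewrite <- RInt_minus by (apply (ex_RInt_cont_on 0 a); try apply HJ; lra).
  apply RInt_ext. intros r Hr. rewrite Rmin_left, Rmax_right in Hr by lra.
  apply RInt_minus_Chasles;
    apply (ex_RInt_cont_on 0 a); try apply cont_on2_fix_l; assumption || lra.
Qed.

Lemma triangle_outer_increment_le t t' K e : 0 <= t -> t <= t' -> t' <= a -> 0 <= K ->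
  (forall x y, 0 <= x <= a -> 0 <= y <= a -> norm (F x y) <= K) ->
  (forall r x, 0 <= r <= t -> t <= x <= t' -> norm (minus (F r x) (F r t)) <= e) ->
  norm (minus (minus (RInt (fun r => RInt (F r) r t') 0 t') (RInt (fun r => RInt (F r) r t) 0 t))
              (scal (t' - t) (RInt (fun r => F r t) 0 t)))
    <= (t' - t) * ((t' - t) * K) + t * ((t' - t) * e).
Proof.
  intros Ht0 Htt Ht'a HK0 HKb He.
  assert (HFl : forall r, 0 <= r <= a -> cont_on 0 a (F r))
    by (intros; apply cont_on2_fix_l; assumption).
  assert (HFh : cont_on 0 a (fun r => scal (t' - t) (F r t)))
    by (apply cont_on_scal, cont_on2_fix_r; assumption || lra).
  assert (HFtt : cont_on 0 a (fun r => RInt (F r) t t'))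
    by (apply cont_on_RInt_u_v; assumption || lra).
  rewrite triangle_outer_increment by lra.
  rewrite <- RInt_scal
    by (apply (ex_RInt_cont_on 0 a); try apply cont_on2_fix_r; assumption || lra).
  rewrite (@minus_plus_assoc Z), <- RInt_minus by (apply (ex_RInt_cont_on 0 a); assumption || lra).
  eapply Rle_trans; [apply (@norm_triangle R_AbsRing Z)|]. apply Rplus_le_compat.
  - apply (norm_RInt_le_const (fun r => RInt (F r) r t') t t' _ ((t' - t) * K)); [lra| |].
    + intros r Hr. eapply Rle_trans.
      * apply (norm_RInt_le_between 0 a r t' (F r) K); try apply HFl; try lra.
        intros; apply HKb; lra.
      * apply Rmult_le_compat_r; [exact HK0|]. rewrite Rabs_pos_eq; lra.
    + apply RInt_correct, (ex_RInt_cont_on 0 a); try apply cont_on_RInt_t_c; assumption || lra.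
  - rewrite <- (Rminus_0_r t) at 2.
    apply (norm_RInt_le_const (fun r => minus (RInt (F r) t t') (scal (t' - t) (F r t))) 0 t _
             ((t' - t) * e));
      [lra| |apply RInt_correct, ex_RInt_minus; apply (ex_RInt_cont_on 0 a); assumption || lra].
    intros r Hr.
    apply norm_RInt_minus_const_le; [lra | apply (ex_RInt_cont_on 0 a); try apply HFl; lra |].
    intros x Hx. apply He; lra.
Qed.

Lemma triangle_defect_increment eps : 0 < eps -> exists d, 0 < d /\
  forall t t', 0 <= t -> t <= t' -> t' <= a -> t' - t < d ->
    norm (minus (triangle_defect t') (triangle_defect t)) <= eps * (t' - t).
Proof.
  intros He. set (I1 := fun s => RInt (fun r => F r s) 0 s).
  assert (HI1 : cont_on 0 a I1) by (apply cont_on_RInt_0_t; assumption).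
  destruct (cont_on2_bounded 0 a F Ha HF) as [K [HK0 HKb]].
  destruct (cont_on_unif 0 a I1 HI1 (eps / 3)) as [d1 [Hd1 Hu1]]; [lra|].
  set (e2 := eps / (3 * (a + 1))).
  destruct (cont_on2_unif 0 a F HF e2) as [d2 [Hd2 Hu2]]; [apply Rdiv_lt_0_compat; lra|].
  set (d3 := eps / (3 * (K + 1))).
  exists (Rmin d1 (Rmin d2 d3)).
  split; [repeat apply Rmin_pos; try lra; apply Rdiv_lt_0_compat; lra|].
  intros t t' Ht0 Htt Ht'a Hh.
  pose proof (Rmin_l d1 (Rmin d2 d3)). pose proof (Rmin_r d1 (Rmin d2 d3)).
  pose proof (Rmin_l d2 d3). pose proof (Rmin_r d2 d3).
  (* Both halves of the defect grow like (t' - t) * I1 t. *)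
  set (X := scal (t' - t) (I1 t)).
  assert (A1 : norm (minus (minus (RInt I1 0 t') (RInt I1 0 t)) X) <= (t' - t) * (eps / 3)).
  { rewrite (RInt_minus_Chasles I1 0 t t') by (apply (ex_RInt_cont_on 0 a); assumption || lra).
    apply norm_RInt_minus_const_le; [lra | apply (ex_RInt_cont_on 0 a); assumption || lra |].
    intros x Hx. left. apply Hu1; try lra. rewrite Rabs_pos_eq; lra. }
  assert (A2 : norm (minus (minus (RInt (fun r => RInt (F r) r t') 0 t')
                                 (RInt (fun r => RInt (F r) r t) 0 t)) X)
               <= (t' - t) * ((t' - t) * K) + t * ((t' - t) * e2)).
  { apply triangle_outer_increment_le; try assumption.
    intros r x Hr Hx. left.
    apply Hu2; try lra; [rewrite Rminus_eq_0, Rabs_R0 | rewrite Rabs_pos_eq]; lra. }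
  unfold triangle_defect. fold I1. rewrite (@minus_minus_exchange Z).
  eapply Rle_trans; [apply (norm_minus_triangle _ X)|]. rewrite (norm_minus_sym X).
  assert ((t' - t) * K <= eps / 3).
  { apply Rle_trans with (d3 * K); [apply Rmult_le_compat_r; lra|].
    unfold d3. apply Rmult_le_reg_r with (3 * (K + 1)); [lra|]. field_simplify; nra. }
  assert (t * e2 <= eps / 3).
  { unfold e2. apply Rmult_le_reg_r with (3 * (a + 1)); [lra|]. field_simplify; nra. }
  assert ((t' - t) * ((t' - t) * K) <= (t' - t) * (eps / 3)) by (apply Rmult_le_compat_l; lra).
  assert (t * ((t' - t) * e2) <= (t' - t) * (eps / 3)) by nra.
  lra.
Qed.

Lemma RInt_triangle_swap t : 0 <= t <= a ->
  RInt (fun s => RInt (fun r => F r s) 0 s) 0 t = RInt (fun r => RInt (fun s => F r s) r t) 0 t.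
Proof.
  intros Ht. rewrite <- (@plus_minus_cancel_r Z (RInt _ 0 t) (RInt (fun r => RInt (F r) r t) 0 t)).
  fold (triangle_defect t). rewrite (small_increments_eq_zero triangle_defect 0 a); try assumption.
  - apply plus_zero_l.
  - unfold triangle_defect. rewrite !RInt_point. apply (@minus_eq_zero Z).
  - apply triangle_defect_increment.
Qed.

End TriangleSwap.

Lemma unif_part_Riemann_fine a b : a <= b ->
  filterlim (fun n => SF_seq_f2 (fun x _ => x) (unif_part a b n)) eventually (Riemann_fine a b).
Proof.
  intros Hab P [delta HP].
  destruct (INR_mult_unbounded (b - a) delta (cond_pos delta)) as [N HN].
  exists N. intros n Hn.
  destruct (Riemann_fine_unif_part (fun x _ => x) a b n) as [Hstep [Hptd [Hh Hl]]];
    [intros; lra | exact Hab |].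
  apply HP.
  - eapply Rle_lt_trans; [exact Hstep|]. apply Rlt_div_l; [pose proof (pos_INR n); lra|].
    apply le_INR in Hn. pose proof (cond_pos delta). nra.
  - rewrite Rmin_left, Rmax_right by exact Hab. auto.
Qed.

Section OperatorsAndIntegrals.
Context {Z : CompleteNormedModule R_AbsRing}.

Lemma Riemann_sum_linear (l : Z -> Z) (f : R -> Z) ptd : is_linear l ->
  Riemann_sum (fun x => l (f x)) ptd = l (Riemann_sum f ptd).
Proof.
  intros Hl. induction ptd as [x0|h ptd IH] using SF_cons_ind.
  - symmetry. apply (linear_zero l Hl).
  - rewrite !Riemann_sum_cons, IH, (linear_plus l Hl), (linear_scal l Hl). reflexivity.
Qed.

Lemma is_RInt_linear (l : Z -> Z) (f : R -> Z) a b I : is_linear l ->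
  is_RInt f a b I -> is_RInt (fun x => l (f x)) a b (l I).
Proof.
  intros Hl Hf. unfold is_RInt.
  apply filterlim_ext with (f := fun ptd => l (scal (sign (b - a)) (Riemann_sum f ptd))).
  { intros ptd. rewrite (linear_scal l Hl), Riemann_sum_linear by exact Hl. reflexivity. }
  eapply filterlim_comp; [exact Hf | apply (@linear_cont R_AbsRing Z Z), Hl].
Qed.

Lemma RInt_linear (l : Z -> Z) (f : R -> Z) a b : is_linear l -> ex_RInt f a b ->
  RInt (fun x => l (f x)) a b = l (RInt f a b).
Proof. intros Hl Hf. apply is_RInt_unique, is_RInt_linear, RInt_correct; assumption. Qed.

Section ClosedOperator.
Variables (D : Z -> Prop) (A : Z -> Z).
Hypothesis HA : closed_op D A.

Lemma closed_op_zero : D zero /\ A zero = zero.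
Proof.
  destruct HA as [H0 [_ [Hs _]]]. split; [exact H0|].
  assert (E : (zero : Z) = scal (0 : R) (zero : Z)) by (symmetry; apply (@scal_zero_l _ Z)).
  rewrite E at 1. rewrite (proj2 (Hs _ _ H0)). apply (@scal_zero_l _ Z).
Qed.

Lemma closed_op_opp x : D x -> D (opp x) /\ A (opp x) = opp (A x).
Proof.
  destruct HA as [_ [_ [Hs _]]]. intros Hx.
  rewrite <- !(@scal_opp_one _ Z). apply Hs, Hx.
Qed.

Lemma closed_op_plus x y : D x -> D y -> D (plus x y) /\ A (plus x y) = plus (A x) (A y).
Proof. destruct HA as [_ [Hp _]]. apply Hp. Qed.

Lemma closed_op_minus x y : D x -> D y -> D (minus x y) /\ A (minus x y) = minus (A x) (A y).
Proof.
  intros Hx Hy. destruct (closed_op_opp y Hy) as [Hy' Ey].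
  destruct (closed_op_plus x (opp y) Hx Hy') as [Hxy Exy].
  split; [exact Hxy|]. transitivity (plus (A x) (A (opp y))); [exact Exy|]. rewrite Ey. reflexivity.
Qed.

Lemma closed_op_Riemann_sum (Phi Psi : R -> Z) ptd :
  (forall t, D (Phi t) /\ A (Phi t) = Psi t) ->
  D (Riemann_sum Phi ptd) /\ A (Riemann_sum Phi ptd) = Riemann_sum Psi ptd.
Proof.
  destruct HA as [_ [_ [Hs _]]]. intros HPhi.
  induction ptd as [x0|h ptd [IH1 IH2]] using SF_cons_ind.
  - apply closed_op_zero.
  - rewrite !Riemann_sum_cons. destruct (HPhi (snd h)) as [Hh1 Hh2].
    destruct (Hs (SF_h ptd - fst h) _ Hh1) as [Hs1 Hs2].
    destruct (closed_op_plus _ _ Hs1 IH1) as [Hp1 Hp2].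
    split; [exact Hp1|].
    transitivity (plus (A (scal (SF_h ptd - fst h) (Phi (snd h)))) (A (Riemann_sum Phi ptd)));
      [exact Hp2|].
    rewrite Hs2, Hh2, IH2. reflexivity.
Qed.

(* Closedness of A is sequential, so the Riemann sums are taken along uniform partitions. *)
Lemma closed_op_is_RInt (Phi Psi : R -> Z) a b I J : a <= b ->
  (forall t, D (Phi t) /\ A (Phi t) = Psi t) ->
  is_RInt Phi a b I -> is_RInt Psi a b J -> D I /\ A I = J.
Proof.
  destruct HA as [_ [_ [Hs Hc]]]. intros Hab HPhi HI HJ.
  set (ptd := fun n => SF_seq_f2 (fun x _ => x) (unif_part a b n)).
  set (c := sign (b - a)).
  assert (Hn : forall n, D (scal c (Riemann_sum Phi (ptd n))) /\
                 A (scal c (Riemann_sum Phi (ptd n))) = scal c (Riemann_sum Psi (ptd n))).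
  { intros n. destruct (closed_op_Riemann_sum Phi Psi (ptd n) HPhi) as [H1 H2].
    rewrite <- H2. apply Hs, H1. }
  apply (Hc (fun n => scal c (Riemann_sum Phi (ptd n)))).
  - intros n. apply Hn.
  - apply (filterlim_comp _ _ _ ptd (fun p => scal c (Riemann_sum Phi p)) _ (Riemann_fine a b));
      [apply unif_part_Riemann_fine, Hab | exact HI].
  - eapply filterlim_ext; [intros n; symmetry; apply Hn|].
    apply (filterlim_comp _ _ _ ptd (fun p => scal c (Riemann_sum Psi p)) _ (Riemann_fine a b));
      [apply unif_part_Riemann_fine, Hab | exact HJ].
Qed.

Lemma closed_op_RInt (Phi Psi : R -> Z) a b : a <= b -> ex_RInt Phi a b -> ex_RInt Psi a b ->
  (forall t, a <= t <= b -> D (Phi t) /\ A (Phi t) = Psi t) ->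
  D (RInt Phi a b) /\ A (RInt Phi a b) = RInt Psi a b.
Proof.
  intros Hab HPhi HPsi H.
  assert (Hclamp : forall f : R -> Z, ex_RInt f a b ->
            is_RInt (fun t => f (clamp a b t)) a b (RInt f a b)).
  { intros f Hf. apply (is_RInt_ext f); [|apply RInt_correct, Hf].
    intros x Hx. rewrite Rmin_left, Rmax_right in Hx by exact Hab.
    rewrite clamp_id; [reflexivity | lra]. }
  apply (closed_op_is_RInt (fun t => Phi (clamp a b t)) (fun t => Psi (clamp a b t)) a b);
    try apply Hclamp; try assumption.
  intros t. apply H, clamp_in, Hab.
Qed.

End ClosedOperator.
End OperatorsAndIntegrals.

Section ChangeOfVariables.
Context {Z : CompleteNormedModule R_AbsRing}.

Lemma RInt_shift (f : R -> Z) r p q : ex_RInt f (p + r) (q + r) ->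
  RInt (fun y => f (y + r)) p q = RInt f (p + r) (q + r).
Proof.
  intros Hf. transitivity (RInt (fun y => scal 1 (f (1 * y + r))) p q).
  - apply RInt_ext. intros y _. rewrite Rmult_1_l. symmetry. apply (@scal_one _ Z).
  - rewrite (RInt_comp_lin f 1 r p q); rewrite !Rmult_1_l; [reflexivity | exact Hf].
Qed.

Lemma RInt_reflect (f : R -> Z) c p q : ex_RInt f (c - q) (c - p) ->
  RInt (fun y => f (c - y)) p q = RInt f (c - q) (c - p).
Proof.
  intros Hf.
  assert (E : forall x, - 1 * x + c = c - x) by (intros; ring).
  assert (Hf' : ex_RInt f (-1 * p + c) (-1 * q + c)) by (rewrite !E; apply ex_RInt_swap, Hf).
  transitivity (opp (RInt (fun y => scal (-1) (f (-1 * y + c))) p q)).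
  - rewrite <- RInt_opp by (apply (ex_RInt_comp_lin f (-1) c p q), Hf').
    apply RInt_ext. intros y _. rewrite E.
    change (-1) with (opp (one : R_AbsRing)). rewrite (@scal_opp_one _ Z).
    symmetry. apply (@opp_opp Z).
  - rewrite (RInt_comp_lin f (-1) c p q) by exact Hf'. rewrite !E.
    apply opp_RInt_swap, ex_RInt_swap, Hf.
Qed.

End ChangeOfVariables.

(** * Mild solutions and Duhamel's principle *)

Section OperatorFamilies.
Context {Z : CompleteNormedModule R_AbsRing}.

Definition op_family_on (a b : R) (K : R -> Z -> Z) : Prop :=
  (forall s, a <= s <= b -> is_linear (K s)) /\
  (forall s0 x0 eps, a <= s0 <= b -> 0 < eps -> exists d, 0 < d /\
     forall s x, a <= s <= b -> Rabs (s - s0) < d -> norm (minus x x0) < d ->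
       norm (minus (K s x) (K s0 x0)) < eps).

Lemma cont_on2_op_family a b K (W : R -> R -> Z) : op_family_on a b K -> cont_on2 a b W ->
  cont_on2 a b (fun r s => K s (W r s)).
Proof.
  intros [_ HK] HW x y eps Hx Hy He.
  destruct (HK y (W x y) eps Hy He) as [d1 [Hd1 H1]].
  destruct (HW x y d1 Hx Hy Hd1) as [d2 [Hd2 H2]].
  exists (Rmin d1 d2); split; [apply Rmin_pos; assumption|].
  intros x' y' Hx' Hy' Hxx Hyy. pose proof (Rmin_l d1 d2). pose proof (Rmin_r d1 d2).
  apply H1; [exact Hy' | lra | apply H2; try assumption; lra].
Qed.

Lemma cont_on_op_family a b K (u : R -> Z) : op_family_on a b K -> cont_on a b u ->
  cont_on a b (fun s => K s (u s)).
Proof.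
  intros HK Hu.
  exact (cont_on2_diag a b _ (cont_on2_op_family a b K _ HK (cont_on2_of_snd a b u Hu))).
Qed.

Lemma op_family_reflect a b c K : op_family_on a b K ->
  op_family_on (c - b) (c - a) (fun t x => opp (K (c - t) x)).
Proof.
  intros [Hl Hc]. split.
  - intros s Hs. assert (L := Hl (c - s) ltac:(lra)). split.
    + intros x y. rewrite (linear_plus _ L). apply (@opp_plus Z).
    + intros k x. rewrite (linear_scal _ L). symmetry. apply (@scal_opp_r _ Z).
    + destruct (linear_norm _ L) as [M [HM HM']]. exists M; split; [exact HM|].
      intros x. rewrite (@norm_opp R_AbsRing Z). apply HM'.
  - intros s0 x0 eps Hs0 He. destruct (Hc (c - s0) x0 eps ltac:(lra) He) as [d [Hd Hd']].
    exists d; split; [exact Hd|]. intros s x Hs Hss Hx.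
    unfold minus at 1. rewrite <- opp_plus, (@norm_opp R_AbsRing Z).
    apply Hd'; [lra | | exact Hx].
    replace (c - s - (c - s0)) with (- (s - s0)) by ring. rewrite Rabs_Ropp. exact Hss.
Qed.

Lemma op_family_sub a b c d (K : R -> Z -> Z) : op_family_on a b K -> a <= c -> d <= b ->
  op_family_on c d K.
Proof.
  intros [Hl Hc] Hac Hdb. split.
  - intros s Hs. apply Hl. lra.
  - intros s0 x0 eps Hs0 He. destruct (Hc s0 x0 eps ltac:(lra) He) as [e [He' H]].
    exists e; split; [exact He'|]. intros s x Hs. apply H. lra.
Qed.

Lemma op_family_reflect_0 a (K : R -> Z -> Z) : op_family_on 0 a K ->
  op_family_on 0 a (fun t x => opp (K (a - t) x)).
Proof.
  intros HK. pose proof (op_family_reflect 0 a a K HK) as H.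
  rewrite Rminus_eq_0, Rminus_0_r in H. exact H.
Qed.

End OperatorFamilies.

Section MildEquation.
Context {Z : CompleteNormedModule R_AbsRing}.
Variables (D : Z -> Prop) (A : Z -> Z).
Hypothesis HA : closed_op D A.

(* The integral equation of [mild_sol] with the coefficients b s, l s in place of B (phi s w),
   L (phi s w) (see [mild_sol_iff]); keeping them abstract lets us shift and reflect time. *)
Definition mild_eq (b l : R -> Z -> Z) (a0 a1 : R) (u f : R -> Z) : Prop :=
  forall t, a0 <= t <= a1 ->
    D (RInt (fun s => b s (u s)) a0 t) /\
    u t = plus (plus (u a0) (A (RInt (fun s => b s (u s)) a0 t)))
               (RInt (fun s => plus (l s (u s)) (f s)) a0 t).

Lemma mild_eq_ext b b' l l' a0 a1 (u u' f f' : R -> Z) : a0 <= a1 ->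
  (forall s x, a0 <= s <= a1 -> b s x = b' s x) -> (forall s x, a0 <= s <= a1 -> l s x = l' s x) ->
  (forall s, a0 <= s <= a1 -> u s = u' s) -> (forall s, a0 <= s <= a1 -> f s = f' s) ->
  mild_eq b l a0 a1 u f -> mild_eq b' l' a0 a1 u' f'.
Proof.
  intros Ha Eb El Eu Ef H t Ht. destruct (H t Ht) as [H1 H2].
  assert (E1 : RInt (fun s => b' s (u' s)) a0 t = RInt (fun s => b s (u s)) a0 t).
  { apply RInt_ext. intros x Hx. rewrite Rmin_left, Rmax_right in Hx by lra.
    rewrite Eb, Eu by lra. reflexivity. }
  assert (E2 : RInt (fun s => plus (l' s (u' s)) (f' s)) a0 t =
               RInt (fun s => plus (l s (u s)) (f s)) a0 t).
  { apply RInt_ext. intros x Hx. rewrite Rmin_left, Rmax_right in Hx by lra.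
    rewrite El, Eu, Ef by lra. reflexivity. }
  rewrite E1, E2, <- !Eu by lra. split; assumption.
Qed.

Section Linearity.
Variables (a0 a1 : R) (b l : R -> Z -> Z).
Hypotheses (Hb : op_family_on a0 a1 b) (Hl : op_family_on a0 a1 l).

Lemma mild_eq_plus (u1 u2 f1 f2 : R -> Z) :
  cont_on a0 a1 u1 -> cont_on a0 a1 u2 -> cont_on a0 a1 f1 -> cont_on a0 a1 f2 ->
  mild_eq b l a0 a1 u1 f1 -> mild_eq b l a0 a1 u2 f2 ->
  mild_eq b l a0 a1 (fun t => plus (u1 t) (u2 t)) (fun t => plus (f1 t) (f2 t)).
Proof.
  intros Hu1 Hu2 Hf1 Hf2 H1 H2 t Ht.
  destruct (H1 t Ht) as [D1 E1], (H2 t Ht) as [D2 E2].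
  assert (Hex : forall g : R -> Z, cont_on a0 a1 g -> ex_RInt g a0 t)
    by (intros; apply (ex_RInt_cont_on a0 a1); try assumption; lra).
  assert (EB : RInt (fun s => b s (plus (u1 s) (u2 s))) a0 t =
               plus (RInt (fun s => b s (u1 s)) a0 t) (RInt (fun s => b s (u2 s)) a0 t)).
  { rewrite <- RInt_plus by (apply Hex, cont_on_op_family; assumption).
    apply RInt_ext. intros x Hx. rewrite Rmin_left, Rmax_right in Hx by lra.
    apply (linear_plus _ (proj1 Hb x ltac:(lra))). }
  assert (EL : RInt (fun s => plus (l s (plus (u1 s) (u2 s))) (plus (f1 s) (f2 s))) a0 t =
               plus (RInt (fun s => plus (l s (u1 s)) (f1 s)) a0 t)
                    (RInt (fun s => plus (l s (u2 s)) (f2 s)) a0 t)).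
  { rewrite <- RInt_plus by (apply Hex, cont_on_plus; try apply cont_on_op_family; assumption).
    apply RInt_ext. intros x Hx. rewrite Rmin_left, Rmax_right in Hx by lra.
    rewrite (linear_plus _ (proj1 Hl x ltac:(lra))). apply (@plus_plus_exchange Z). }
  rewrite EB, EL. destruct (closed_op_plus D A HA _ _ D1 D2) as [Dp Ap].
  split; [exact Dp|]. rewrite Ap, E1, E2.
  rewrite (@plus_plus_exchange Z _ (RInt _ a0 t) _ (RInt _ a0 t)), (@plus_plus_exchange Z (u1 a0)).
  reflexivity.
Qed.

Lemma mild_eq_opp (u f : R -> Z) : cont_on a0 a1 u -> cont_on a0 a1 f ->
  mild_eq b l a0 a1 u f -> mild_eq b l a0 a1 (fun t => opp (u t)) (fun t => opp (f t)).
Proof.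
  intros Hu Hf H t Ht. destruct (H t Ht) as [D1 E1].
  assert (Hex : forall g : R -> Z, cont_on a0 a1 g -> ex_RInt g a0 t)
    by (intros; apply (ex_RInt_cont_on a0 a1); try assumption; lra).
  assert (EB : RInt (fun s => b s (opp (u s))) a0 t = opp (RInt (fun s => b s (u s)) a0 t)).
  { rewrite <- RInt_opp by (apply Hex, cont_on_op_family; assumption).
    apply RInt_ext. intros x Hx. rewrite Rmin_left, Rmax_right in Hx by lra.
    apply (linear_opp _ _ (proj1 Hb x ltac:(lra))). }
  assert (EL : RInt (fun s => plus (l s (opp (u s))) (opp (f s))) a0 t =
               opp (RInt (fun s => plus (l s (u s)) (f s)) a0 t)).
  { rewrite <- RInt_opp by (apply Hex, cont_on_plus; try apply cont_on_op_family; assumption).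
    apply RInt_ext. intros x Hx. rewrite Rmin_left, Rmax_right in Hx by lra.
    rewrite (linear_opp _ _ (proj1 Hl x ltac:(lra))). symmetry. apply (@opp_plus Z). }
  rewrite EB, EL. destruct (closed_op_opp D A HA _ D1) as [Do Ao].
  split; [exact Do|]. rewrite Ao, E1, !(@opp_plus Z). reflexivity.
Qed.

Lemma mild_eq_minus (u1 u2 f1 f2 : R -> Z) :
  cont_on a0 a1 u1 -> cont_on a0 a1 u2 -> cont_on a0 a1 f1 -> cont_on a0 a1 f2 ->
  mild_eq b l a0 a1 u1 f1 -> mild_eq b l a0 a1 u2 f2 ->
  mild_eq b l a0 a1 (fun t => minus (u1 t) (u2 t)) (fun t => minus (f1 t) (f2 t)).
Proof.
  intros Hu1 Hu2 Hf1 Hf2 H1 H2.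
  apply mild_eq_plus; try apply cont_on_opp; try assumption. apply mild_eq_opp; assumption.
Qed.

End Linearity.

End MildEquation.

Section MildEquationTransport.
Context {Z : CompleteNormedModule R_AbsRing}.
Variables (D : Z -> Prop) (A : Z -> Z).
Hypothesis HA : closed_op D A.

Lemma mild_eq_shift b l r c (u f : R -> Z) : 0 <= c ->
  op_family_on r (r + c) b -> op_family_on r (r + c) l -> cont_on 0 c u -> cont_on r (r + c) f ->
  mild_eq D A (fun s => b (s + r)) (fun s => l (s + r)) 0 c u (fun s => f (s + r)) ->
  mild_eq D A b l r (r + c) (fun t => u (t - r)) f.
Proof.
  intros Hc Hb Hl Hu Hf H t Ht. destruct (H (t - r) ltac:(lra)) as [H1 H2].
  assert (Hu' : cont_on r (r + c) (fun t => u (t - r)))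
    by (pose proof (cont_on_shift 0 c r u Hu) as Hs;
        rewrite Rplus_0_l, (Rplus_comm c) in Hs; exact Hs).
  assert (Hshift : forall g : R -> Z, cont_on r (r + c) g ->
            RInt (fun s => g (s + r)) 0 (t - r) = RInt g r t).
  { intros g Hg. rewrite RInt_shift by (apply (ex_RInt_cont_on r (r + c)); try assumption; lra).
    f_equal; ring. }
  assert (E1 : RInt (fun s => b (s + r) (u s)) 0 (t - r) = RInt (fun s => b s (u (s - r))) r t).
  { rewrite <- Hshift by (apply cont_on_op_family; assumption).
    apply RInt_ext. intros s _. do 2 f_equal. ring. }
  assert (E2 : RInt (fun s => plus (l (s + r) (u s)) (f (s + r))) 0 (t - r) =
               RInt (fun s => plus (l s (u (s - r))) (f s)) r t).
  { rewrite <- Hshift by (apply cont_on_plus; try apply cont_on_op_family; assumption).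
    apply RInt_ext. intros s _. do 3 f_equal. ring. }
  rewrite E1 in H1, H2. rewrite E2 in H2. rewrite Rminus_eq_0. split; assumption.
Qed.

Lemma mild_eq_reflect b l a0 a1 c (u f : R -> Z) : a0 <= a1 ->
  op_family_on a0 a1 b -> op_family_on a0 a1 l -> cont_on a0 a1 u -> cont_on a0 a1 f ->
  mild_eq D A b l a0 a1 u f ->
  mild_eq D A (fun s x => opp (b (c - s) x)) (fun s x => opp (l (c - s) x)) (c - a1) (c - a0)
    (fun t => u (c - t)) (fun t => opp (f (c - t))).
Proof.
  intros Ha Hb Hl Hu Hf H t Ht.
  set (gb := fun s => b s (u s)). set (gl := fun s => plus (l s (u s)) (f s)).
  assert (Hgb : cont_on a0 a1 gb) by (unfold gb; apply cont_on_op_family; assumption).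
  assert (Hgl : cont_on a0 a1 gl)
    by (unfold gl; apply cont_on_plus; try apply cont_on_op_family; assumption).
  assert (Hrefl : forall g : R -> Z, cont_on a0 a1 g ->
     RInt (fun s => opp (g (c - s))) (c - a1) t = minus (RInt g a0 (c - t)) (RInt g a0 a1)).
  { intros g Hg.
    rewrite RInt_opp by (apply (ex_RInt_cont_on (c - a1) (c - a0)); try apply cont_on_reflect; 
                         try assumption; lra).
    rewrite RInt_reflect by (apply (ex_RInt_cont_on a0 a1); try assumption; lra).
    replace (c - (c - a1)) with a1 by ring.
    rewrite <- (RInt_minus_Chasles g a0 (c - t) a1)
      by (apply (ex_RInt_cont_on a0 a1); try assumption; lra).
    apply opp_minus. }
  assert (E1 : RInt (fun s => opp (b (c - s) (u (c - s)))) (c - a1) t =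
               minus (RInt gb a0 (c - t)) (RInt gb a0 a1)) by exact (Hrefl gb Hgb).
  assert (E2 : RInt (fun s => plus (opp (l (c - s) (u (c - s)))) (opp (f (c - s)))) (c - a1) t =
               minus (RInt gl a0 (c - t)) (RInt gl a0 a1)).
  { rewrite <- (Hrefl gl Hgl). apply RInt_ext. intros s _. unfold gl.
    symmetry. apply (@opp_plus Z). }
  rewrite E1. replace (c - (c - a1)) with a1 by ring.
  destruct (H (c - t) ltac:(lra)) as [Dt Et], (H a1 ltac:(lra)) as [D1 E1'].
  fold gb gl in Dt, Et, D1, E1'.
  destruct (closed_op_minus D A HA _ _ Dt D1) as [Dm Am].
  split; [exact Dm|]. rewrite Am.
  transitivity (plus (plus (u a1) (minus (A (RInt gb a0 (c - t))) (A (RInt gb a0 a1))))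
                     (minus (RInt gl a0 (c - t)) (RInt gl a0 a1))).
  - apply (@plus_plus_rebase Z) with (v := u a0); assumption.
  - f_equal. symmetry. exact E2.
Qed.

End MildEquationTransport.

Section Duhamel.
Context {Z : CompleteNormedModule R_AbsRing}.
Variables (D : Z -> Prop) (A : Z -> Z).
Hypothesis HA : closed_op D A.
Variables (a : R) (b l : R -> Z -> Z).
Hypotheses (Ha : 0 <= a) (Hb : op_family_on 0 a b) (Hl : op_family_on 0 a l).

(* Integrate the equation of W r at time t over r in [0, t]: A commutes with the r-integral
   by [closed_op_RInt], and [RInt_triangle_swap] exchanges the order of integration. *)
Lemma duhamel_forward (W : R -> R -> Z) : cont_on2 0 a W ->
  (forall r, 0 <= r <= a -> mild_eq D A b l r a (W r) zero_fun) ->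
  mild_eq D A b l 0 a (fun t => RInt (fun r => W r t) 0 t) (fun s => W s s).
Proof.
  intros HW Hk t Ht. cbv beta.
  assert (Hv : cont_on 0 a (fun t => RInt (fun r => W r t) 0 t))
    by (apply cont_on_RInt_0_t; assumption).
  assert (Hex : forall g : R -> Z, cont_on 0 a g -> ex_RInt g 0 t)
    by (intros; apply (ex_RInt_cont_on 0 a); try assumption; lra).
  assert (Hswap : forall K, op_family_on 0 a K ->
     RInt (fun s => K s (RInt (fun r => W r s) 0 s)) 0 t =
     RInt (fun r => RInt (fun s => K s (W r s)) r t) 0 t).
  { intros K HK. rewrite <- (RInt_triangle_swap a (fun r s => K s (W r s)))
      by (try apply cont_on2_op_family; assumption || lra).
    apply RInt_ext. intros s Hs. rewrite Rmin_left, Rmax_right in Hs by lra.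
    symmetry. apply RInt_linear; [apply (proj1 HK); lra|].
    apply (ex_RInt_cont_on 0 a); [lra | lra | apply cont_on2_fix_r; [exact HW | lra]]. }
  set (Phi := fun r => RInt (fun s => b s (W r s)) r t).
  set (Lam := fun r => RInt (fun s => l s (W r s)) r t).
  set (Psi := fun r => minus (minus (W r t) (W r r)) (Lam r)).
  assert (HPhi : cont_on 0 a Phi)
    by (apply cont_on_RInt_t_c; [lra | apply cont_on2_op_family; assumption]).
  assert (HLam : cont_on 0 a Lam)
    by (apply cont_on_RInt_t_c; [lra | apply cont_on2_op_family; assumption]).
  assert (HWt : cont_on 0 a (fun r => W r t)) by (apply cont_on2_fix_r; [exact HW | lra]).
  assert (HWd : cont_on 0 a (fun r => W r r)) by (apply cont_on2_diag, HW).
  assert (HPsi : cont_on 0 a Psi) by (repeat apply cont_on_minus; assumption).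
  assert (HAPhi : D (RInt Phi 0 t) /\ A (RInt Phi 0 t) = RInt Psi 0 t).
  { apply closed_op_RInt; try apply Hex; try assumption; [lra|].
    intros r Hr. destruct (Hk r ltac:(lra) t ltac:(lra)) as [Hk1 Hk2].
    split; [exact Hk1|]. apply (@minus_minus_of_plus_plus Z). rewrite Hk2 at 1. f_equal.
    apply RInt_ext. intros s _. apply (@plus_zero_r Z). }
  destruct HAPhi as [HD HAI].
  rewrite (Hswap b Hb). split; [exact HD|].
  change (RInt (fun r => RInt (fun s => b s (W r s)) r t) 0 t) with (RInt Phi 0 t).
  rewrite HAI. unfold Psi.
  rewrite (@RInt_minus Z), (@RInt_minus Z), (@RInt_plus Z) by (apply Hex; try apply cont_on_minus;
    try apply cont_on_op_family; assumption).
  rewrite (Hswap l Hl).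
  change (RInt (fun r => RInt (fun s => l s (W r s)) r t) 0 t) with (RInt Lam 0 t).
  rewrite RInt_point, (@plus_zero_l Z). symmetry. apply (@minus_minus_plus_cancel Z).
Qed.

End Duhamel.

Section DuhamelBackward.
Context {Z : CompleteNormedModule R_AbsRing}.
Variables (D : Z -> Prop) (A : Z -> Z).
Hypothesis HA : closed_op D A.
Variables (a : R) (b l : R -> Z -> Z).
Hypotheses (Ha : 0 <= a) (Hb : op_family_on 0 a b) (Hl : op_family_on 0 a l).

(* Time reversal t |-> a - t turns the backward problem into a forward one. *)
Lemma duhamel_backward (V : R -> R -> Z) : cont_on2 0 a V ->
  (forall s, 0 <= s <= a -> mild_eq D A b l 0 s (fun t => V t s) zero_fun) ->
  mild_eq D A b l 0 a (fun t => RInt (V t) t a) (fun r => opp (V r r)).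
Proof.
  intros HV Hk.
  set (b' := fun s x => opp (b (a - s) x)). set (l' := fun s x => opp (l (a - s) x)).
  assert (Hb' : op_family_on 0 a b') by (apply op_family_reflect_0, Hb).
  assert (Hl' : op_family_on 0 a l') by (apply op_family_reflect_0, Hl).
  set (V' := fun r t => V (a - t) (a - r)).
  assert (HV' : cont_on2 0 a V').
  { pose proof (cont_on2_reflect 0 a a V HV) as H. rewrite Rminus_eq_0, Rminus_0_r in H. exact H. }
  assert (Hzero : forall c d, cont_on c d (@zero_fun Z))
    by (intros; apply cont_on_of_continuous; intros; apply continuous_const).
  assert (Hk' : forall r, 0 <= r <= a -> mild_eq D A b' l' r a (V' r) zero_fun).
  { intros r Hr.
    assert (H := mild_eq_reflect D A HA b l 0 (a - r) a (fun t => V t (a - r)) zero_fun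
                   ltac:(lra) (op_family_sub 0 a 0 (a - r) b Hb ltac:(lra) ltac:(lra))
                   (op_family_sub 0 a 0 (a - r) l Hl ltac:(lra) ltac:(lra))
                   (cont_on_sub 0 a 0 (a - r) _ (cont_on2_fix_r 0 a V (a - r) HV ltac:(lra))
                      ltac:(lra) ltac:(lra))
                   (Hzero 0 (a - r)) (Hk (a - r) ltac:(lra))).
    replace (a - (a - r)) with r in H by ring. rewrite Rminus_0_r in H.
    refine (mild_eq_ext D A _ _ _ _ r a _ _ _ _ ltac:(lra) _ _ _ _ H); intros; try reflexivity.
    apply (@opp_zero Z). }
  assert (Hfw := duhamel_forward D A HA a b' l' Ha Hb' Hl' V' HV' Hk').
  set (v' := fun t => RInt (fun r => V' r t) 0 t) in Hfw.
  assert (Hv' : cont_on 0 a v') by (apply cont_on_RInt_0_t; assumption).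
  assert (H := mild_eq_reflect D A HA b' l' 0 a a v' (fun s => V' s s) Ha Hb' Hl' Hv'
                 (cont_on2_diag 0 a V' HV') Hfw).
  rewrite Rminus_eq_0, Rminus_0_r in H.
  refine (mild_eq_ext D A _ _ _ _ 0 a _ _ _ _ Ha _ _ _ _ H); intros s x Hs || intros s Hs.
  - unfold b'. rewrite (@opp_opp Z). f_equal. ring.
  - unfold l'. rewrite (@opp_opp Z). f_equal. ring.
  - unfold v', V'. rewrite <- (Rminus_0_r a) at 2.
    rewrite (RInt_reflect (V (a - (a - s))) a 0 (a - s))
      by (replace (a - (a - s)) with s by ring; rewrite Rminus_0_r;
          apply (ex_RInt_cont_on 0 a); try lra; apply cont_on2_fix_l; [exact HV | lra]).
    replace (a - (a - s)) with s by ring. reflexivity.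
  - unfold V'. replace (a - (a - s)) with s by ring. reflexivity.
Qed.

End DuhamelBackward.

(** * Cocycles and cocycle correspondences over a semiflow *)

Lemma Rabs_Rmax_sub_0_lip r s r0 s0 :
  Rabs (Rmax (s - r) 0 - Rmax (s0 - r0) 0) <= Rabs (r - r0) + Rabs (s - s0).
Proof. unfold Rmax; repeat destruct Rle_dec; unfold Rabs; repeat destruct Rcase_abs; lra. Qed.

Lemma Rabs_Rmin_lip r s r0 s0 : Rabs (Rmin r s - Rmin r0 s0) <= Rabs (r - r0) + Rabs (s - s0).
Proof. unfold Rmin; repeat destruct Rle_dec; unfold Rabs; repeat destruct Rcase_abs; lra. Qed.

Lemma Rabs_sub_Rmin_lip r s r0 s0 :
  Rabs ((s - Rmin r s) - (s0 - Rmin r0 s0)) <= Rabs (r - r0) + Rabs (s - s0).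
Proof. unfold Rmin; repeat destruct Rle_dec; unfold Rabs; repeat destruct Rcase_abs; lra. Qed.

Section Semiflow.
Context {M : Type} (tau : topology M) {Z : CompleteNormedModule R_AbsRing}.
Variable phi : R -> M -> M.
Hypothesis Hphi : semiflow tau phi.

Lemma semiflow_cont_time w s0 U : 0 <= s0 -> is_open tau U -> U (phi s0 w) ->
  exists d, 0 < d /\ forall s, 0 <= s -> Rabs (s - s0) < d -> U (phi s w).
Proof.
  destruct Hphi as [_ [_ Hc]]. intros Hs0 HU HUw.
  destruct (Hc s0 w U Hs0 HU HUw) as [d [U' [Hd [_ [HU'w H]]]]].
  exists d; split; [exact Hd|]. intros s Hs Hss. apply (H s w Hs Hss HU'w).
Qed.

Lemma op_family_along (K : M -> Z -> Z) w a0 a1 : 0 <= a0 ->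
  (forall w, is_linear (K w)) -> cont_MZ tau K -> op_family_on a0 a1 (fun s => K (phi s w)).
Proof.
  intros Ha0 Hlin Hc. split; [intros; apply Hlin|].
  intros s0 x0 eps Hs0 He.
  destruct (Hc (phi s0 w) x0 eps He) as [U [d1 [HU [HUw [Hd1 H1]]]]].
  destruct (semiflow_cont_time w s0 U ltac:(lra) HU HUw) as [d2 [Hd2 H2]].
  exists (Rmin d1 d2); split; [apply Rmin_pos; assumption|].
  intros s x Hs Hss Hx. pose proof (Rmin_l d1 d2). pose proof (Rmin_r d1 d2).
  apply H1; [apply H2; lra | lra].
Qed.

Lemma op_family_coef (K : M -> Z -> Z) w a0 a1 : coef_op tau phi K -> 0 <= a0 ->
  op_family_on a0 a1 (fun s => K (phi s w)).
Proof. intros [Hlin [Hc _]] Ha0. apply op_family_along; assumption. Qed.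

(* The continuity clause of [C0_cocycle] and [C0_correspondence]; x ranges over the fibre
   S t w. *)
Definition jointly_continuous (S : R -> M -> Z -> Prop) (T : R -> M -> Z -> Z) : Prop :=
  forall t w x eps, 0 <= t -> S t w x -> 0 < eps -> exists d U, 0 < d /\ is_open tau U /\ U w /\
    forall s w' x', 0 <= s -> Rabs (s - t) < d -> U w' -> S s w' x' -> norm (minus x' x) < d ->
      norm (minus (T s w' x') (T t w x)) < eps.

Lemma cont_on2_kernel S T (sigma rho : R -> R -> R) (h : R -> R -> Z) w a :
  jointly_continuous S T ->
  (forall r s r0 s0, Rabs (sigma r s - sigma r0 s0) <= Rabs (r - r0) + Rabs (s - s0)) ->
  (forall r s r0 s0, Rabs (rho r s - rho r0 s0) <= Rabs (r - r0) + Rabs (s - s0)) ->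
  (forall r s, 0 <= r <= a -> 0 <= s <= a ->
     0 <= sigma r s /\ 0 <= rho r s /\ S (sigma r s) (phi (rho r s) w) (h r s)) ->
  cont_on2 0 a h -> cont_on2 0 a (fun r s => T (sigma r s) (phi (rho r s) w) (h r s)).
Proof.
  intros HT Hsig Hrho Hin Hh r0 s0 eps Hr0 Hs0 He.
  destruct (Hin r0 s0 Hr0 Hs0) as [Hsig0 [Hrho0 HS0]].
  destruct (HT _ _ _ eps Hsig0 HS0 He) as [d [U [Hd [HU [HUw HTd]]]]].
  destruct (semiflow_cont_time w (rho r0 s0) U Hrho0 HU HUw) as [d2 [Hd2 H2]].
  destruct (Hh r0 s0 d Hr0 Hs0 Hd) as [d3 [Hd3 H3]].
  exists (Rmin (d / 2) (Rmin (d2 / 2) d3)).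
  split; [repeat apply Rmin_pos; lra|].
  intros r s Hr Hs Hrr Hss.
  pose proof (Rmin_l (d / 2) (Rmin (d2 / 2) d3)). pose proof (Rmin_r (d / 2) (Rmin (d2 / 2) d3)).
  pose proof (Rmin_l (d2 / 2) d3). pose proof (Rmin_r (d2 / 2) d3).
  pose proof (Hsig r s r0 s0). pose proof (Hrho r s r0 s0).
  destruct (Hin r s Hr Hs) as [Hsig1 [Hrho1 HS1]].
  apply HTd; try assumption; try lra.
  - apply H2; lra.
  - apply H3; assumption || lra.
Qed.

End Semiflow.

Lemma mild_sol_iff {M : Type} {Z : CompleteNormedModule R_AbsRing} (D : Z -> Prop) A
  (B L : M -> Z -> Z) phi w (g : R -> Z) a0 a1 u :
  mild_sol D A B L phi w g a0 a1 u <->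
  cont_on a0 a1 u /\ mild_eq D A (fun s => B (phi s w)) (fun s => L (phi s w)) a0 a1 u g.
Proof. reflexivity. Qed.

Section CocycleVariationOfConstants.
Context {M : Type} (tau : topology M) {Z : CompleteNormedModule R_AbsRing}.
Variables (phi : R -> M -> M) (D : Z -> Prop) (A : Z -> Z) (B L : M -> Z -> Z).
Variable T0 : R -> M -> Z -> Z.
Hypotheses (Hphi : semiflow tau phi) (HA : closed_op D A)
  (HB : coef_op tau phi B) (HL : coef_op tau phi L) (HT : C0_cocycle tau D A B L phi T0).
Variables (w : M) (a : R) (g : R -> Z).
Hypotheses (Ha : 0 <= a) (Hg : cont_on 0 a g).

Local Notation b := (fun s => B (phi s w)).
Local Notation l := (fun s => L (phi s w)).

Let Hb : op_family_on 0 a b := op_family_coef tau phi Hphi B w 0 a HB (Rle_refl 0).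
Let Hl : op_family_on 0 a l := op_family_coef tau phi Hphi L w 0 a HL (Rle_refl 0).

Lemma cocycle_orbit_mild r x : 0 <= r <= a ->
  mild_eq D A b l r a (fun t => T0 (t - r) (phi r w) x) zero_fun.
Proof.
  destruct HT as [_ [_ [_ [_ Tmild]]]]. pose proof Hphi as [_ [Hadd _]]. intros Hr.
  destruct (Tmild (phi r w) x (a - r) ltac:(lra)) as [[Hc Hm] _].
  assert (Hs := mild_eq_shift D A b l r (a - r) (fun t => T0 t (phi r w) x) zero_fun).
  replace (r + (a - r)) with a in Hs by ring.
  apply Hs; try apply (op_family_coef tau phi Hphi); try assumption; try lra.
  - apply cont_on_of_continuous. intros; apply continuous_const.
  - refine (mild_eq_ext D A _ _ _ _ 0 (a - r) _ _ _ _ ltac:(lra) _ _ _ _ Hm);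
      intros; try reflexivity; rewrite Hadd by lra; reflexivity.
Qed.

Lemma cocycle_duhamel :
  cont_on 0 a (fun t => RInt (fun r => T0 (t - r) (phi r w) (g r)) 0 t) /\
  mild_eq D A b l 0 a (fun t => RInt (fun r => T0 (t - r) (phi r w) (g r)) 0 t) g.
Proof.
  destruct HT as [_ [Tid [_ [Tcont _]]]].
  set (W := fun r s => T0 (Rmax (s - r) 0) (phi r w) (g r)).
  assert (HW : cont_on2 0 a W).
  { apply (cont_on2_kernel tau phi Hphi (fun _ _ _ => True)); try easy.
    - intros t w' x eps Ht _ He. destruct (Tcont t w' x eps Ht He) as [d [U [Hd [HU [HUw H]]]]].
      exists d, U. repeat split; try assumption. intros; apply H; assumption.
    - apply Rabs_Rmax_sub_0_lip.
    - intros r s r0 s0. pose proof (Rabs_pos (s - s0)). lra.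
    - intros r s Hr Hs. split; [apply Rmax_r|]. split; [lra | exact I].
    - apply cont_on2_of_fst, Hg. }
  assert (HWt : forall t, 0 <= t <= a ->
            RInt (fun r => W r t) 0 t = RInt (fun r => T0 (t - r) (phi r w) (g r)) 0 t).
  { intros t Ht. apply RInt_ext. intros r Hr. rewrite Rmin_left, Rmax_right in Hr by lra.
    unfold W. rewrite Rmax_left by lra. reflexivity. }
  split.
  - apply (cont_on_ext 0 a _ _ HWt), cont_on_RInt_0_t; assumption.
  - refine (mild_eq_ext D A _ _ _ _ 0 a _ _ _ _ Ha _ _ HWt _
              (duhamel_forward D A HA a b l Ha Hb Hl W HW _)); try (intros; reflexivity).
    + intros s Hs. unfold W. rewrite Rminus_eq_0, Rmax_left by lra. apply Tid.
    + intros r Hr. refine (mild_eq_ext D A _ _ _ _ r a _ _ _ _ ltac:(lra) _ _ _ _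
                             (cocycle_orbit_mild r (g r) Hr)); intros; try reflexivity.
      unfold W. rewrite Rmax_left by lra. reflexivity.
Qed.

Theorem cocycle_variation_of_constants z : mild_sol D A B L phi w g 0 a z ->
  forall t, 0 <= t <= a ->
    z t = plus (T0 t w (z 0)) (RInt (fun s => T0 (t - s) (phi s w) (g s)) 0 t).
Proof.
  destruct HT as [Tlin [Tid [_ [_ Tmild]]]]. intros Hz.
  destruct (proj1 (mild_sol_iff D A B L phi w g 0 a z) Hz) as [Hzc Hzm].
  destruct (Tmild w (z 0) a Ha) as [Hu0 _].
  destruct (proj1 (mild_sol_iff _ _ _ _ _ _ _ _ _ _) Hu0) as [Hu0c Hu0m].
  destruct cocycle_duhamel as [Hvc Hvm].
  set (u0 := fun t => T0 t w (z 0)) in *.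
  set (v := fun t => RInt (fun r => T0 (t - r) (phi r w) (g r)) 0 t) in *.
  set (e := fun t => minus (minus (z t) (u0 t)) (v t)).
  assert (Hzero : cont_on 0 a (@zero_fun Z))
    by (apply cont_on_of_continuous; intros; apply continuous_const).
  assert (He : mild_sol D A B L phi w zero_fun 0 a e).
  { apply mild_sol_iff. split; [repeat apply cont_on_minus; assumption|].
    refine (mild_eq_ext D A _ _ _ _ 0 a _ _ _ _ Ha _ _ _ _
              (mild_eq_minus D A HA 0 a b l Hb Hl _ _ _ _ _ Hvc _ Hg
                 (mild_eq_minus D A HA 0 a b l Hb Hl _ _ _ _ Hzc Hu0c Hg Hzero Hzm Hu0m) Hvm));
      try (intros; reflexivity); try (apply cont_on_minus; assumption).
    intros s _. unfold zero_fun. rewrite (@minus_zero_r Z). apply (@minus_eq_zero Z). }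
  assert (He0 : e 0 = zero).
  { unfold e, u0, v. rewrite Tid, RInt_point, (@minus_eq_zero Z). apply (@minus_zero_r Z). }
  destruct (Tmild w zero a Ha) as [_ Huniq].
  intros t Ht. apply (@eq_plus_of_minus_minus Z). fold (u0 t) (v t) (e t).
  rewrite (Huniq e He He0 t Ht). apply (linear_zero _ (Tlin t w ltac:(lra))).
Qed.

End CocycleVariationOfConstants.

Section Projections.
Context {M : Type} {Z : CompleteNormedModule R_AbsRing}.
Variable P : M -> Z -> Z.
Hypotheses (Plin : forall w, is_linear (P w)) (Pidem : forall w z, P w (P w z) = P w z).

Lemma Pc_linear w : is_linear (Pc P w).
Proof.
  destruct (linear_norm _ (Plin w)) as [K [HK HK']]. split; unfold Pc.
  - intros x y. rewrite (linear_plus _ (Plin w)). apply (@minus_plus_exchange Z).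
  - intros k x. rewrite (linear_scal _ (Plin w)). symmetry. apply (@scal_minus_distr_l _ Z).
  - exists (1 + K). split; [lra|]. intros x. unfold minus.
    eapply Rle_trans; [apply (@norm_triangle R_AbsRing Z)|].
    rewrite (@norm_opp R_AbsRing Z). specialize (HK' x). lra.
Qed.

Lemma Xsp_P w x : Xsp P w (P w x).
Proof. apply Pidem. Qed.

Lemma Ysp_Pc w x : Ysp P w (Pc P w x).
Proof.
  unfold Ysp, Pc. rewrite (linear_minus _ _ _ (Plin w)), Pidem, (@minus_eq_zero Z).
  apply (@minus_zero_r Z).
Qed.

Lemma P_Ysp w y : Ysp P w y -> P w y = zero.
Proof.
  unfold Ysp, Pc. intros H. rewrite <- H at 1.
  rewrite (linear_minus _ _ _ (Plin w)), Pidem. apply (@minus_eq_zero Z).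
Qed.

Lemma Pc_Xsp w x : Xsp P w x -> Pc P w x = zero.
Proof. unfold Xsp, Pc. intros ->. apply (@minus_eq_zero Z). Qed.

Lemma Xsp_zero w : Xsp P w zero.
Proof. apply (linear_zero _ (Plin w)). Qed.

Lemma Ysp_zero w : Ysp P w zero.
Proof. apply (linear_zero _ (Pc_linear w)). Qed.

Lemma Xsp_plus w x y : Xsp P w x -> Xsp P w y -> Xsp P w (plus x y).
Proof. unfold Xsp. intros Hx Hy. rewrite (linear_plus _ (Plin w)), Hx, Hy. reflexivity. Qed.

Lemma Ysp_minus w x y : Ysp P w x -> Ysp P w y -> Ysp P w (minus x y).
Proof.
  unfold Ysp. intros Hx Hy. rewrite (linear_minus _ _ _ (Pc_linear w)), Hx, Hy. reflexivity.
Qed.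

End Projections.

Lemma RInt_linear_fixed {Z : CompleteNormedModule R_AbsRing} (l : Z -> Z) (f : R -> Z) c d :
  is_linear l -> c <= d -> ex_RInt f c d -> (forall s, c <= s <= d -> l (f s) = f s) ->
  l (RInt f c d) = RInt f c d.
Proof.
  intros Hl Hcd Hf H. rewrite <- RInt_linear by assumption.
  apply RInt_ext. intros s Hs. rewrite Rmin_left, Rmax_right in Hs by exact Hcd. apply H. lra.
Qed.

Lemma lin_between_zero {Z : CompleteNormedModule R_AbsRing} (S1 S2 : Z -> Prop) T :
  lin_between S1 S2 T -> S1 zero -> T zero = zero.
Proof.
  intros [_ [_ [Hs _]]] H0.
  assert (E : (zero : Z) = scal (0 : R) (zero : Z)) by (symmetry; apply (@scal_zero_l _ Z)).
  rewrite E at 1. rewrite (Hs 0 zero H0). apply (@scal_zero_l _ Z).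
Qed.

Section CorrespondenceVariationOfConstants.
Context {M : Type} (tau : topology M) {Z : CompleteNormedModule R_AbsRing}.
Variables (phi : R -> M -> M) (D : Z -> Prop) (A : Z -> Z) (B L : M -> Z -> Z).
Variables (P : M -> Z -> Z) (T1 Sb : R -> M -> Z -> Z).
Hypotheses (Hphi : semiflow tau phi) (HA : closed_op D A)
  (HB : coef_op tau phi B) (HL : coef_op tau phi L)
  (HC : C0_correspondence tau D A B L phi P T1 Sb).
Variables (w : M) (a : R) (g : R -> Z).
Hypotheses (Ha : 0 <= a) (Hg : cont_on 0 a g).

Local Notation b := (fun s => B (phi s w)).
Local Notation l := (fun s => L (phi s w)).
Local Notation gX := (fun s => P (phi s w) (g s)).
Local Notation gY := (fun s => Pc P (phi s w) (g s)).

Let Hb : op_family_on 0 a b := op_family_coef tau phi Hphi B w 0 a HB (Rle_refl 0).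
Let Hl : op_family_on 0 a l := op_family_coef tau phi Hphi L w 0 a HL (Rle_refl 0).

Lemma cont_on_gX : cont_on 0 a gX.
Proof.
  destruct HC as [Plin [_ [Pcont _]]].
  apply (cont_on_op_family 0 a (fun s => P (phi s w))); [|exact Hg].
  apply (op_family_along tau phi Hphi); [lra | exact Plin | exact Pcont].
Qed.

Lemma cont_on_gY : cont_on 0 a gY.
Proof. apply cont_on_minus; [exact Hg | exact cont_on_gX]. Qed.

Lemma T1_zero t w' : 0 <= t -> T1 t w' zero = zero.
Proof.
  destruct HC as [Plin [_ [_ [T1lin _]]]]. intros Ht.
  apply (lin_between_zero _ _ _ (T1lin t w' Ht)), Xsp_zero, Plin.
Qed.

Lemma Sb_zero t w' : 0 <= t -> Sb t w' zero = zero.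
Proof.
  destruct HC as [Plin [_ [_ [_ [_ [_ [_ [Sblin _]]]]]]]]. intros Ht.
  apply (lin_between_zero _ _ _ (Sblin t w' Ht)), Ysp_zero, Plin.
Qed.

Lemma cont_on2_kernel_X : cont_on2 0 a (fun r s => T1 (Rmax (s - r) 0) (phi r w) (gX r)).
Proof.
  destruct HC as [_ [Pidem [_ [_ [_ [_ [T1cont _]]]]]]].
  apply (cont_on2_kernel tau phi Hphi (fun _ w' x => Xsp P w' x)).
  - exact T1cont.
  - apply Rabs_Rmax_sub_0_lip.
  - intros r s r0 s0. pose proof (Rabs_pos (s - s0)). lra.
  - intros r s Hr Hs. split; [apply Rmax_r|]. split; [lra | apply Xsp_P, Pidem].
  - apply cont_on2_of_fst, cont_on_gX.
Qed.

Lemma cont_on2_kernel_Y : cont_on2 0 a (fun r s => Sb (s - Rmin r s) (phi (Rmin r s) w) (gY s)).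
Proof.
  destruct HC as [Plin [Pidem [_ [_ [_ [_ [_ [_ [_ [_ [Sbcont _]]]]]]]]]]].
  pose proof Hphi as [_ [Hadd _]].
  apply (cont_on2_kernel tau phi Hphi (fun t w' y => Ysp P (phi t w') y)).
  - exact Sbcont.
  - apply Rabs_sub_Rmin_lip.
  - apply Rabs_Rmin_lip.
  - intros r s Hr Hs. pose proof (Rmin_r r s). pose proof (Rmin_glb r s 0 ltac:(lra) ltac:(lra)).
    split; [lra|]. split; [lra|].
    rewrite <- Hadd by lra. replace (s - Rmin r s + Rmin r s) with s by ring.
    apply (Ysp_Pc P Plin Pidem).
  - apply cont_on2_of_snd, cont_on_gY.
Qed.

Lemma ex_RInt_kernel_X t : 0 <= t <= a -> ex_RInt (fun r => T1 (t - r) (phi r w) (gX r)) 0 t.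
Proof.
  intros Ht. apply (ex_RInt_cont_on 0 t); try lra.
  apply (cont_on_ext 0 t (fun r => T1 (Rmax (t - r) 0) (phi r w) (gX r))).
  - intros r Hr. rewrite Rmax_left by lra. reflexivity.
  - apply (cont_on_sub 0 a); try lra. exact (cont_on2_fix_r 0 a _ t cont_on2_kernel_X ltac:(lra)).
Qed.

Lemma ex_RInt_kernel_Y t : 0 <= t <= a -> ex_RInt (fun s => Sb (s - t) (phi t w) (gY s)) t a.
Proof.
  intros Ht. apply (ex_RInt_cont_on t a); try lra.
  apply (cont_on_ext t a (fun s => Sb (s - Rmin t s) (phi (Rmin t s) w) (gY s))).
  - intros s Hs. rewrite Rmin_left by lra. reflexivity.
  - apply (cont_on_sub 0 a); try lra. exact (cont_on2_fix_l 0 a _ t cont_on2_kernel_Y ltac:(lra)).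
Qed.

Lemma correspondence_forward_orbit r x : 0 <= r <= a -> Xsp P (phi r w) x ->
  cont_on r a (fun t => T1 (t - r) (phi r w) x) /\
  mild_eq D A b l r a (fun t => T1 (t - r) (phi r w) x) zero_fun.
Proof.
  destruct HC as [Plin [_ [_ [_ [_ [_ [_ [_ [_ [_ [_ BVP]]]]]]]]]]]. intros Hr Hx.
  destruct (BVP w r a x zero ltac:(lra) ltac:(lra) Hx (Ysp_zero P Plin _)) as [[[Hc Hm] _] _].
  assert (E : forall t, r <= t <= a -> plus (T1 (t - r) (phi r w) x) (Sb (a - t) (phi t w) zero) =
                                       T1 (t - r) (phi r w) x)
    by (intros; rewrite Sb_zero by lra; apply (@plus_zero_r Z)).
  split; [exact (cont_on_ext r a _ _ E Hc)|].
  refine (mild_eq_ext D A _ _ _ _ r a _ _ _ _ ltac:(lra) _ _ E _ Hm); intros; reflexivity.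
Qed.

Lemma correspondence_backward_orbit s y : 0 <= s <= a -> Ysp P (phi s w) y ->
  cont_on 0 s (fun t => Sb (s - t) (phi t w) y) /\
  mild_eq D A b l 0 s (fun t => Sb (s - t) (phi t w) y) zero_fun.
Proof.
  destruct HC as [Plin [_ [_ [_ [_ [_ [_ [_ [_ [_ [_ BVP]]]]]]]]]]]. intros Hs Hy.
  destruct (BVP w 0 s zero y ltac:(lra) ltac:(lra) (Xsp_zero P Plin _) Hy) as [[[Hc Hm] _] _].
  assert (E : forall t, 0 <= t <= s ->
            plus (T1 (t - 0) (phi 0 w) zero) (Sb (s - t) (phi t w) y) = Sb (s - t) (phi t w) y)
    by (intros; rewrite T1_zero by lra; apply (@plus_zero_l Z)).
  split; [exact (cont_on_ext 0 s _ _ E Hc)|].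
  refine (mild_eq_ext D A _ _ _ _ 0 s _ _ _ _ ltac:(lra) _ _ E _ Hm); intros; reflexivity.
Qed.

Lemma correspondence_duhamel_X :
  cont_on 0 a (fun t => RInt (fun r => T1 (t - r) (phi r w) (gX r)) 0 t) /\
  mild_eq D A b l 0 a (fun t => RInt (fun r => T1 (t - r) (phi r w) (gX r)) 0 t) gX.
Proof.
  destruct HC as [_ [Pidem [_ [_ [T1id _]]]]].
  set (W := fun r s => T1 (Rmax (s - r) 0) (phi r w) (gX r)).
  assert (HW : cont_on2 0 a W) by apply cont_on2_kernel_X.
  assert (HWt : forall t, 0 <= t <= a ->
            RInt (fun r => W r t) 0 t = RInt (fun r => T1 (t - r) (phi r w) (gX r)) 0 t).
  { intros t Ht. apply RInt_ext. intros r Hr. rewrite Rmin_left, Rmax_right in Hr by lra.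
    unfold W. rewrite Rmax_left by lra. reflexivity. }
  split.
  - apply (cont_on_ext 0 a _ _ HWt), cont_on_RInt_0_t; assumption.
  - refine (mild_eq_ext D A _ _ _ _ 0 a _ _ _ _ Ha _ _ HWt _
              (duhamel_forward D A HA a b l Ha Hb Hl W HW _)); try (intros; reflexivity).
    + intros s Hs. unfold W. rewrite Rminus_eq_0, Rmax_left by lra. apply T1id, Xsp_P, Pidem.
    + intros r Hr. destruct (correspondence_forward_orbit r (gX r) Hr (Xsp_P P Pidem _ _))
        as [_ Hm].
      refine (mild_eq_ext D A _ _ _ _ r a _ _ _ _ ltac:(lra) _ _ _ _ Hm); intros; try reflexivity.
      unfold W. rewrite Rmax_left by lra. reflexivity.
Qed.

Lemma correspondence_duhamel_Y :
  cont_on 0 a (fun t => RInt (fun s => Sb (s - t) (phi t w) (gY s)) t a) /\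
  mild_eq D A b l 0 a (fun t => RInt (fun s => Sb (s - t) (phi t w) (gY s)) t a)
    (fun s => opp (gY s)).
Proof.
  destruct HC as [Plin [Pidem [_ [_ [_ [_ [_ [_ [Sbid _]]]]]]]]].
  set (V := fun r s => Sb (s - Rmin r s) (phi (Rmin r s) w) (gY s)).
  assert (HV : cont_on2 0 a V) by apply cont_on2_kernel_Y.
  assert (HVt : forall t, 0 <= t <= a ->
            RInt (V t) t a = RInt (fun s => Sb (s - t) (phi t w) (gY s)) t a).
  { intros t Ht. apply RInt_ext. intros s Hs. rewrite Rmin_left, Rmax_right in Hs by lra.
    unfold V. rewrite Rmin_left by lra. reflexivity. }
  split.
  - apply (cont_on_ext 0 a _ _ HVt), cont_on_RInt_t_c; [lra | assumption].
  - refine (mild_eq_ext D A _ _ _ _ 0 a _ _ _ _ Ha _ _ HVt _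
              (duhamel_backward D A HA a b l Ha Hb Hl V HV _)); try (intros; reflexivity).
    + intros r Hr. unfold V. rewrite Rmin_left, Rminus_eq_0 by lra. f_equal.
      apply Sbid. apply (Ysp_Pc P Plin Pidem).
    + intros s Hs. destruct (correspondence_backward_orbit s (gY s) Hs (Ysp_Pc P Plin Pidem _ _))
        as [_ Hm].
      refine (mild_eq_ext D A _ _ _ _ 0 s _ _ _ _ ltac:(lra) _ _ _ _ Hm); intros; try reflexivity.
      unfold V. rewrite Rmin_left by lra. reflexivity.
Qed.

Definition x_candidate (X0 : Z) (t : R) : Z :=
  plus (T1 t w X0) (RInt (fun r => T1 (t - r) (phi r w) (gX r)) 0 t).

Definition y_candidate (Ya : Z) (t : R) : Z :=
  minus (Sb (a - t) (phi t w) Ya) (RInt (fun s => Sb (s - t) (phi t w) (gY s)) t a).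

Lemma x_candidate_mild X0 : Xsp P w X0 ->
  cont_on 0 a (x_candidate X0) /\ mild_eq D A b l 0 a (x_candidate X0) gX.
Proof.
  pose proof Hphi as [phi0 _]. intros HX0.
  assert (HX0' : Xsp P (phi 0 w) X0) by (rewrite phi0; exact HX0).
  destruct (correspondence_forward_orbit 0 X0 ltac:(lra) HX0') as [Hoc Hom].
  assert (E : forall t, 0 <= t <= a -> T1 (t - 0) (phi 0 w) X0 = T1 t w X0)
    by (intros; rewrite Rminus_0_r, phi0; reflexivity).
  apply (cont_on_ext 0 a _ _ E) in Hoc.
  apply (mild_eq_ext D A _ _ _ _ 0 a _ _ _ _ Ha (fun _ _ _ => eq_refl) (fun _ _ _ => eq_refl) E
           (fun _ _ => eq_refl)) in Hom.
  destruct correspondence_duhamel_X as [Hvc Hvm].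
  split; [apply cont_on_plus; assumption|].
  refine (mild_eq_ext D A _ _ _ _ 0 a _ _ _ _ Ha _ _ _ _
            (mild_eq_plus D A HA 0 a b l Hb Hl _ _ _ _ Hoc Hvc _ cont_on_gX Hom Hvm));
    try (intros; reflexivity); try (apply cont_on_of_continuous; intros; apply continuous_const).
  intros s _. apply (@plus_zero_l Z).
Qed.

Lemma x_candidate_range X0 t : Xsp P w X0 -> 0 <= t <= a -> Xsp P (phi t w) (x_candidate X0 t).
Proof.
  destruct HC as [Plin [Pidem [_ [T1lin _]]]]. pose proof Hphi as [_ [Hadd _]].
  intros HX0 Ht. apply (Xsp_plus P Plin).
  - apply (T1lin t w ltac:(lra)), HX0.
  - apply RInt_linear_fixed; [apply Plin | lra | apply ex_RInt_kernel_X, Ht |].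
    intros r Hr. replace (phi t w) with (phi (t - r) (phi r w))
      by (rewrite <- Hadd by lra; f_equal; ring).
    apply (T1lin (t - r) (phi r w) ltac:(lra)), (Xsp_P P Pidem).
Qed.

Lemma x_candidate_0 X0 : Xsp P w X0 -> x_candidate X0 0 = X0.
Proof.
  destruct HC as [_ [_ [_ [_ [T1id _]]]]]. intros HX0.
  unfold x_candidate. rewrite T1id by exact HX0. rewrite RInt_point. apply (@plus_zero_r Z).
Qed.

Lemma y_candidate_mild Ya : Ysp P (phi a w) Ya ->
  cont_on 0 a (y_candidate Ya) /\ mild_eq D A b l 0 a (y_candidate Ya) gY.
Proof.
  intros HYa.
  destruct (correspondence_backward_orbit a Ya ltac:(lra) HYa) as [Hoc Hom].
  destruct correspondence_duhamel_Y as [Hvc Hvm].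
  assert (Hzero : cont_on 0 a (@zero_fun Z))
    by (apply cont_on_of_continuous; intros; apply continuous_const).
  split; [apply cont_on_minus; assumption|].
  refine (mild_eq_ext D A _ _ _ _ 0 a _ _ _ _ Ha _ _ _ _
            (mild_eq_minus D A HA 0 a b l Hb Hl _ _ _ _ Hoc Hvc Hzero _ Hom Hvm));
    try (intros; reflexivity); try (apply cont_on_opp, cont_on_gY).
  intros s _. unfold zero_fun, minus. rewrite (@opp_opp Z). apply (@plus_zero_l Z).
Qed.

Lemma y_candidate_range Ya t : Ysp P (phi a w) Ya -> 0 <= t <= a ->
  Ysp P (phi t w) (y_candidate Ya t).
Proof.
  destruct HC as [Plin [Pidem [_ [_ [_ [_ [_ [Sblin _]]]]]]]]. pose proof Hphi as [_ [Hadd _]].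
  intros HYa Ht.
  assert (Hflow : forall s, t <= s -> phi (s - t) (phi t w) = phi s w)
    by (intros s Hs; rewrite <- Hadd by lra; f_equal; ring).
  apply (Ysp_minus P Plin).
  - apply (Sblin (a - t) (phi t w) ltac:(lra)). rewrite Hflow by lra. exact HYa.
  - apply RInt_linear_fixed; [apply Pc_linear, Plin | lra | apply ex_RInt_kernel_Y, Ht |].
    intros s Hs. apply (Sblin (s - t) (phi t w) ltac:(lra)).
    rewrite Hflow by lra. apply (Ysp_Pc P Plin Pidem).
Qed.

Lemma y_candidate_a Ya : Ysp P (phi a w) Ya -> y_candidate Ya a = Ya.
Proof.
  destruct HC as [_ [_ [_ [_ [_ [_ [_ [_ [Sbid _]]]]]]]]]. intros HYa.
  unfold y_candidate. rewrite Rminus_eq_0, Sbid by exact HYa. rewrite RInt_point.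
  apply (@minus_zero_r Z).
Qed.

Lemma correspondence_zero_data e : mild_sol D A B L phi w zero_fun 0 a e ->
  P (phi 0 w) (e 0) = zero -> Pc P (phi a w) (e a) = zero ->
  forall t, 0 <= t <= a -> e t = zero.
Proof.
  destruct HC as [Plin [_ [_ [_ [_ [_ [_ [_ [_ [_ [_ BVP]]]]]]]]]]].
  intros He He0 Hea t Ht.
  destruct (BVP w 0 a zero zero ltac:(lra) Ha (Xsp_zero P Plin _) (Ysp_zero P Plin _)) as [_ Huniq].
  rewrite (Huniq e He He0 Hea t Ht), T1_zero, Sb_zero by lra. apply (@plus_zero_l Z).
Qed.

Theorem correspondence_variation_of_constants z : mild_sol D A B L phi w g 0 a z ->
  let x := fun t => P (phi t w) (z t) in
  let y := fun t => Pc P (phi t w) (z t) in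
  forall t, 0 <= t <= a ->
    x t = plus (T1 t w (x 0)) (RInt (fun s => T1 (t - s) (phi s w) (P (phi s w) (g s))) 0 t) /\
    y t = minus (Sb (a - t) (phi t w) (y a))
                (RInt (fun s => Sb (s - t) (phi t w) (Pc P (phi s w) (g s))) t a).
Proof.
  pose proof HC as [Plin [Pidem _]]. pose proof Hphi as [phi0 _].
  intros Hz x y.
  destruct (proj1 (mild_sol_iff D A B L phi w g 0 a z) Hz) as [Hzc Hzm].
  assert (HX0 : Xsp P w (x 0)) by (unfold x; rewrite phi0; apply (Xsp_P P Pidem)).
  assert (HYa : Ysp P (phi a w) (y a)) by apply (Ysp_Pc P Plin Pidem).
  destruct (x_candidate_mild (x 0) HX0) as [Hpc Hpm].
  destruct (y_candidate_mild (y a) HYa) as [Hqc Hqm].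
  set (e := fun t => minus (z t) (plus (x_candidate (x 0) t) (y_candidate (y a) t))).
  assert (He : mild_sol D A B L phi w zero_fun 0 a e).
  { apply mild_sol_iff. split; [apply cont_on_minus; [|apply cont_on_plus]; assumption|].
    refine (mild_eq_ext D A _ _ _ _ 0 a _ _ _ _ Ha _ _ _ _
              (mild_eq_minus D A HA 0 a b l Hb Hl _ _ _ _ Hzc _ Hg _ Hzm
                 (mild_eq_plus D A HA 0 a b l Hb Hl _ _ _ _ Hpc Hqc cont_on_gX cont_on_gY
                    Hpm Hqm)));
      try (intros; reflexivity);
      try (apply cont_on_plus; assumption || apply cont_on_gX || apply cont_on_gY).
    (* the two parts of the forcing add up to g *)
    intros s _. unfold zero_fun, Pc.
    rewrite (plus_comm (P (phi s w) (g s))), (@plus_minus_cancel_r Z).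
    apply (@minus_eq_zero Z). }
  assert (He0 : P (phi 0 w) (e 0) = zero).
  { unfold e. rewrite (linear_minus _ _ _ (Plin _)), (linear_plus _ (Plin _)).
    rewrite (P_Ysp P Plin Pidem _ _ (y_candidate_range _ 0 HYa ltac:(lra))).
    rewrite (x_candidate_range _ 0 HX0 ltac:(lra)), (x_candidate_0 _ HX0), (@plus_zero_r Z).
    unfold x. rewrite phi0. apply (@minus_eq_zero Z). }
  assert (Hea : Pc P (phi a w) (e a) = zero).
  { unfold e.
    rewrite (linear_minus _ _ _ (Pc_linear P Plin _)), (linear_plus _ (Pc_linear P Plin _)).
    rewrite (Pc_Xsp P _ _ (x_candidate_range _ a HX0 ltac:(lra))).
    rewrite (y_candidate_range _ a HYa ltac:(lra)), (y_candidate_a _ HYa), (@plus_zero_l Z).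
    apply (@minus_eq_zero Z). }
  intros t Ht.
  assert (Hzt : z t = plus (x_candidate (x 0) t) (y_candidate (y a) t)).
  { rewrite <- (@plus_minus_cancel_r Z (z t) (plus (x_candidate (x 0) t) (y_candidate (y a) t))).
    fold (e t).
    rewrite (correspondence_zero_data e He He0 Hea t Ht). apply (@plus_zero_l Z). }
  split.
  - change (x t) with (P (phi t w) (z t)). rewrite Hzt, (linear_plus _ (Plin _)).
    rewrite (x_candidate_range _ t HX0 Ht), (P_Ysp P Plin Pidem _ _ (y_candidate_range _ t HYa Ht)).
    apply (@plus_zero_r Z).
  - change (y t) with (Pc P (phi t w) (z t)). rewrite Hzt, (linear_plus _ (Pc_linear P Plin _)).
    rewrite (Pc_Xsp P _ _ (x_candidate_range _ t HX0 Ht)), (y_candidate_range _ t HYa Ht).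
    apply (@plus_zero_l Z).
Qed.

End CorrespondenceVariationOfConstants.

Theorem lemma3p27 (M : Type) (tau : topology M) (Z : CompleteNormedModule R_AbsRing)
  (phi : R -> M -> M) (D : Z -> Prop) (A : Z -> Z) (B L : M -> Z -> Z) :
  hausdorff tau -> semiflow tau phi -> closed_op D A ->
  coef_op tau phi B -> coef_op tau phi L ->
  (* (1) variation of constants for a C_0 linear cocycle *)
  (forall T0 : R -> M -> Z -> Z, C0_cocycle tau D A B L phi T0 ->
   forall (g : R -> Z) (w : M) (a : R) (z : R -> Z),
     (forall t, continuous g t) -> 0 <= a ->
     mild_sol D A B L phi w g 0 a z ->
     forall t, 0 <= t <= a ->
       z t = plus (T0 t w (z 0)) (RInt (fun s => T0 (t - s) (phi s w) (g s)) 0 t)) /\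
  (* (2) variation of constants for a C_0 cocycle correspondence *)
  (forall (P : M -> Z -> Z) (T1 Sb : R -> M -> Z -> Z),
   C0_correspondence tau D A B L phi P T1 Sb ->
   forall (g : R -> Z) (w : M) (a : R) (z : R -> Z),
     (forall t, continuous g t) -> 0 <= a ->
     mild_sol D A B L phi w g 0 a z ->
     let x := fun t => P (phi t w) (z t) in
     let y := fun t => Pc P (phi t w) (z t) in
     forall t, 0 <= t <= a ->
       x t = plus (T1 t w (x 0))
                  (RInt (fun s => T1 (t - s) (phi s w) (P (phi s w) (g s))) 0 t) /\
       y t = minus (Sb (a - t) (phi t w) (y a))
                   (RInt (fun s => Sb (s - t) (phi t w) (Pc P (phi s w) (g s))) t a)).
Proof.
  intros _ Hphi HA HB HL. split.
  - intros T0 HT g w a z Hg Ha.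
    exact (cocycle_variation_of_constants tau phi D A B L T0 Hphi HA HB HL HT w a g Ha
             (cont_on_of_continuous 0 a g Hg) z).
  - intros P T1 Sb HC g w a z Hg Ha.
    exact (correspondence_variation_of_constants tau phi D A B L P T1 Sb Hphi HA HB HL HC w a g Ha
             (cont_on_of_continuous 0 a g Hg) z).
Qed.
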